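(* Let $\mu$ be a doubling measure on $\mathbb{R}$ (with doubling constant $\delta$). Let $u,v\colon\mathbb{R}\to\mathbb{R}$ be such that $u'=\mu$ in the sense of distributions (i.e. $u(b)-u(a)=\mu([a,b])$ for $a<b$) and $v\in\Lambda_\mu$. Then the image of $\mathbb{R}$ under $\Gamma(t)=u(t)+iv(t)$ is a quasisymmetric graph. Moreover, for every $s>0$ there is $\varepsilon>0$ such that if $\delta\le\varepsilon$ and the $\Lambda_\mu$-seminorm of $v$ is at most $\varepsilon$, then $\Gamma(\mathbb{R})$ is an $s$-quasisymmetric graph.
   Context: A positive Radon measure $\mu$ on $\mathbb{R}$ is doubling if there is $\delta>0$ with $\mu(I)\le(1+\delta)\mu(J)$ for all adjacent intervals $I,J$ of equal length; such a measure is nonatomic. For a nonatomic positive Radon measure $\mu$ on $\mathbb{R}$, the generalized Zygmund class $\Lambda_\mu$ consists of continuous $g\colon\mathbb{R}\to\mathbb{R}$ for which there is $M>0$ with $|g(x+h)-2g(x)+g(x-h)|\le M\mu([x-h,x+h])$ for all $x\in\mathbb{R}$, $h\ge0$; the smallest such $M$ is the $\Lambda_\mu$-seminorm of $g$. An embedding $f$ is quasisymmetric if there is a homeomorphism $\eta\colon[0,\infty)\to[0,\infty)$ with $|f(x)-f(a)|\le\eta(|x-a|/|x-b|)\,|f(x)-f(b)|$ for all distinct $a,b,x$; it is $s$-quasisymmetric if $\eta$ can be chosen with $\eta(t)\le t+s$ for $0\le t\le1/s$. A set $\Gamma\subset\mathbb{C}$ is a quasisymmetric (resp. $s$-quasisymmetric)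 graph if the projection $w\mapsto\operatorname{Re} w$ is a quasisymmetric (resp. $s$-quasisymmetric) homeomorphism of $\Gamma$ onto $\mathbb{R}$. *)

From Stdlib Require Import Reals Lra.
Open Scope R_scope.

Inductive ereal : Type := EFin (r : R) | EInf.

Definition ele (x y : ereal) : Prop :=
  match x, y with
  | EFin a, EFin b => a <= b
  | _, EInf => True
  | EInf, EFin _ => False
  end.

Definition eadd (x y : ereal) : ereal :=
  match x, y with
  | EFin a, EFin b => EFin (a + b)
  | _, _ => EInf
  end.

Fixpoint epartial (f : nat -> ereal) (n : nat) : ereal :=
  match n with
  | O => f O
  | S k => eadd (epartial f k) (f (S k))
  end.

Definition is_esum (f : nat -> ereal) (l : ereal) : Prop :=
  (forall n, ele (epartial f n) l) /\
  (forall m, (forall n, ele (epartial f n) m) -> ele l m).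

Inductive borel : (R -> Prop) -> Prop :=
  | borel_open : forall A, open_set A -> borel A
  | borel_compl : forall A, borel A -> borel (fun x => ~ A x)
  | borel_union : forall A : nat -> R -> Prop,
      (forall n, borel (A n)) -> borel (fun x => exists n, A n x).

Definition Icc (a b : R) : R -> Prop := fun x => a <= x <= b.

Definition borel_measure (mu : (R -> Prop) -> ereal) : Prop :=
  (forall A B, (forall x, A x <-> B x) -> mu A = mu B) /\
  mu (fun _ => False) = EFin 0 /\
  (forall A r, borel A -> mu A = EFin r -> 0 <= r) /\
  (forall A : nat -> R -> Prop,
      (forall n, borel (A n)) ->
      (forall n m x, n <> m -> A n x -> A m x -> False) ->
      is_esum (fun n => mu (A n)) (mu (fun x => exists n, A n x))).

(* Radon measure on R: Borel measure, finite on compact sets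
   (equivalently on compact intervals, which contain every compact set). *)
Definition radon_measure (mu : (R -> Prop) -> ereal) : Prop :=
  borel_measure mu /\ (forall a b, exists r, mu (Icc a b) = EFin r).

Definition nonzero_measure (mu : (R -> Prop) -> ereal) : Prop :=
  exists A, borel A /\ mu A <> EFin 0.

Definition doubling (mu : (R -> Prop) -> ereal) (delta : R) : Prop :=
  forall x h r1 r2, 0 < h ->
    mu (Icc (x - h) x) = EFin r1 -> mu (Icc x (x + h)) = EFin r2 ->
    r1 <= (1 + delta) * r2 /\ r2 <= (1 + delta) * r1.

Definition zygmund_bound (mu : (R -> Prop) -> ereal) (g : R -> R) (M : R) : Prop :=
  forall x h r, 0 <= h -> mu (Icc (x - h) (x + h)) = EFin r ->
    Rabs (g (x + h) - 2 * g x + g (x - h)) <= M * r.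

Definition in_Lambda (mu : (R -> Prop) -> ereal) (g : R -> R) : Prop :=
  continuity g /\ exists M, 0 < M /\ zygmund_bound mu g M.

Definition is_inf (P : R -> Prop) (m : R) : Prop :=
  (forall x, P x -> m <= x) /\ (forall y, (forall x, P x -> y <= x) -> y <= m).

Definition Lambda_seminorm (mu : (R -> Prop) -> ereal) (g : R -> R) (N : R) : Prop :=
  is_inf (fun M => 0 < M /\ zygmund_bound mu g M) N.

(* C is modelled as R * R (real part, imaginary part) *)
Definition Cdist (p q : R * R) : R :=
  sqrt ((fst p - fst q) ^ 2 + (snd p - snd q) ^ 2).

Definition Rdist (x y : R) : R := Rabs (x - y).

Definition cont_on {X Y : Type} (dX : X -> X -> R) (dY : Y -> Y -> R)
  (A : X -> Prop) (f : X -> Y) : Prop :=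
  forall x, A x -> forall eps, 0 < eps -> exists d, 0 < d /\
    forall y, A y -> dX y x < d -> dY (f y) (f x) < eps.

Definition homeo_onto {X Y : Type} (dX : X -> X -> R) (dY : Y -> Y -> R)
  (A : X -> Prop) (B : Y -> Prop) (f : X -> Y) : Prop :=
  (forall x, A x -> B (f x)) /\
  (forall x y, A x -> A y -> f x = f y -> x = y) /\
  cont_on dX dY A f /\
  exists g : Y -> X,
    (forall y, B y -> A (g y) /\ f (g y) = y) /\ cont_on dY dX B g.

Definition nonnegR : R -> Prop := fun t => 0 <= t.

Definition homeo_halfline (eta : R -> R) : Prop :=
  homeo_onto Rdist Rdist nonnegR nonnegR eta.

Definition eta_qs {X Y : Type} (dX : X -> X -> R) (dY : Y -> Y -> R)
  (A : X -> Prop) (f : X -> Y) (eta : R -> R) : Prop :=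
  forall x a b, A x -> A a -> A b -> a <> b -> x <> a -> x <> b ->
    dY (f x) (f a) <= eta (dX x a / dX x b) * dY (f x) (f b).

Definition allR : R -> Prop := fun _ => True.

(* Gamma is a quasisymmetric graph: the projection w |-> Re w is a
   quasisymmetric homeomorphism of Gamma onto R *)
Definition qs_graph (Gamma : R * R -> Prop) : Prop :=
  homeo_onto Cdist Rdist Gamma allR fst /\
  exists eta, homeo_halfline eta /\ eta_qs Cdist Rdist Gamma fst eta.

Definition s_qs_graph (s : R) (Gamma : R * R -> Prop) : Prop :=
  homeo_onto Cdist Rdist Gamma allR fst /\
  exists eta, homeo_halfline eta /\
    (forall t, 0 <= t <= 1 / s -> eta t <= t + s) /\
    eta_qs Cdist Rdist Gamma fst eta.

Definition graph_image (u v : R -> R) : R * R -> Prop :=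
  fun w => exists t, w = (u t, v t).

From Stdlib Require Import Reals Lra Lia.
From Stdlib Require Import IndefiniteDescription FunctionalExtensionality PropExtensionality Classical.
Open Scope R_scope.

(** A point of the graph [Gamma] is [(u t, v t)] and
    its projection to the real axis is [u t].  For parameters [x], [x + Ha],
    [x + Hb], quasisymmetry of the projection asks that the ratio of the
    masses [|u (x + Ha) - u x|] and [|u (x + Hb) - u x|] be at most [eta] of
    the ratio of the corresponding chords of [Gamma]. *)

Lemma Rabs_le_between (x a : R) : Rabs x <= a -> - a <= x <= a.
Proof. unfold Rabs. destruct Rcase_abs; lra. Qed.

Lemma Rdiv_le_0_compat (a b : R) : 0 <= a -> 0 < b -> 0 <= a / b.
Proof.
  intros Ha Hb. unfold Rdiv.
  apply Rmult_le_pos; [exact Ha | left; apply Rinv_0_lt_compat, Hb].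
Qed.

Lemma Rdiv_le_of_le_mul P Q c : 0 < Q -> P <= c * Q -> P / Q <= c.
Proof.
  intros HQ HP. apply Rmult_le_reg_r with Q; [exact HQ|].
  replace (P / Q * Q) with P by (field; lra). exact HP.
Qed.

Lemma ratio_ge_inv P Q C : 0 < P -> 0 < Q -> Q <= C * P -> 1 / C <= P / Q.
Proof.
  intros HP HQ HC. assert (0 < C) by nra.
  apply Rmult_le_reg_r with (C * Q); [nra|].
  replace (1 / C * (C * Q)) with Q by (field; lra).
  replace (P / Q * (C * Q)) with (C * P) by (field; lra). lra.
Qed.

Lemma lt_inv_swap a b : 0 < a -> 0 < b -> a < / b -> b < 1 / a.
Proof.
  intros Ha Hb Hab. unfold Rdiv. rewrite Rmult_1_l.
  rewrite <- (Rinv_inv b). apply Rinv_lt_contravar; [|exact Hab].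
  apply Rmult_lt_0_compat; [exact Ha | apply Rinv_0_lt_compat, Hb].
Qed.

Lemma max_le_pow_scale a b N : 0 < a -> (/ 2) ^ N * b <= a -> Rmax a b <= 2 ^ N * a.
Proof.
  intros Ha Hb. assert (Hp : 1 <= 2 ^ N) by (apply pow_R1_Rle; lra).
  assert (Hinv : 2 ^ N * (/ 2) ^ N = 1) by (rewrite <- Rpow_mult_distr, Rinv_r, pow1; lra).
  unfold Rmax. destruct Rle_dec; [|nra].
  apply Rmult_le_compat_l with (r := 2 ^ N) in Hb; [|lra]. rewrite <- Rmult_assoc, Hinv in Hb. lra.
Qed.

Definition cont_at (f : R -> R) (x : R) : Prop :=
  forall e, 0 < e -> exists d, 0 < d /\
    forall y, Rabs (y - x) < d -> Rabs (f y - f x) < e.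

Lemma continuity_of_cont_at (f : R -> R) : (forall x, cont_at f x) -> continuity f.
Proof.
  intros Hf x e He. destruct (Hf x e He) as [d [Hd Hy]].
  exists d; split; [exact Hd|]. intros y [_ Hyx]. exact (Hy y Hyx).
Qed.

Lemma cont_at_of_continuity (f : R -> R) : continuity f -> forall x, cont_at f x.
Proof.
  intros Hf x e He. destruct (Hf x e He) as [d [Hd Hy]].
  exists d; split; [lra|]. intros y Hyx.
  destruct (Req_dec y x) as [->|Hne].
  - rewrite Rminus_diag, Rabs_R0; lra.
  - apply (Hy y). split; [split; [exact I|auto]|exact Hyx].
Qed.

Lemma cont_ext (f g : R -> R) : (forall x, f x = g x) -> continuity f -> continuity g.
Proof.
  intros Heq Hf. apply continuity_of_cont_at. intros x e He.
  destruct (cont_at_of_continuity f Hf x e He) as [d [Hd H]].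
  exists d; split; [exact Hd|]. intros y Hy. rewrite <- !Heq. auto.
Qed.

Lemma cont_add (f g : R -> R) :
  continuity f -> continuity g -> continuity (fun t => f t + g t).
Proof. exact (continuity_plus f g). Qed.

Lemma cont_mul (f g : R -> R) :
  continuity f -> continuity g -> continuity (fun t => f t * g t).
Proof. exact (continuity_mult f g). Qed.

Lemma cont_id : continuity (fun t => t).
Proof. exact (derivable_continuous _ derivable_id). Qed.

Lemma cont_const (c : R) : continuity (fun _ => c).
Proof. exact (derivable_continuous _ (derivable_const c)). Qed.

Lemma cont_inv (f : R -> R) :
  continuity f -> (forall x, f x <> 0) -> continuity (fun t => / f t).
Proof. exact (continuity_inv f). Qed.

Lemma cont_abs (f : R -> R) : continuity f -> continuity (fun t => Rabs (f t)).
Proof. intros Hf. exact (continuity_comp f Rabs Hf Rcontinuity_abs). Qed.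

Lemma cont_opp (f : R -> R) : continuity f -> continuity (fun t => - f t).
Proof. exact (continuity_opp f). Qed.

Lemma cont_min (f g : R -> R) :
  continuity f -> continuity g -> continuity (fun t => Rmin (f t) (g t)).
Proof.
  intros Hf Hg. apply cont_ext with (fun t => / 2 * (f t + g t + - Rabs (f t + - g t))).
  { intros x. unfold Rmin. destruct Rle_dec; [rewrite Rabs_left1|rewrite Rabs_right]; lra. }
  apply cont_mul; [apply cont_const|].
  apply cont_add; [apply cont_add; auto|]. apply cont_opp, cont_abs, cont_add, cont_opp; auto.
Qed.

Lemma cont_max (f g : R -> R) :
  continuity f -> continuity g -> continuity (fun t => Rmax (f t) (g t)).
Proof.
  intros Hf Hg. apply cont_ext with (fun t => / 2 * (f t + g t + Rabs (f t + - g t))).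
  { intros x. unfold Rmax. destruct Rle_dec; [rewrite Rabs_left1|rewrite Rabs_right]; lra. }
  apply cont_mul; [apply cont_const|].
  apply cont_add; [apply cont_add; auto|]. apply cont_abs, cont_add, cont_opp; auto.
Qed.

Lemma cont_at_of_local_lipschitz (f : R -> R) x a L : 0 < a -> 0 <= L ->
  (forall t t', x - a <= t <= t' -> t' <= x + a -> Rabs (f t' - f t) <= L * (t' - t)) ->
  cont_at f x.
Proof.
  intros Ha HL Hlip e He.
  assert (Hd : 0 < e / (L + 1)) by (apply Rdiv_lt_0_compat; lra).
  assert (HLe : L * (e / (L + 1)) < e).
  { apply Rmult_lt_reg_r with (L + 1); [lra|].
    replace (L * (e / (L + 1)) * (L + 1)) with (L * e) by (field; lra). nra. }
  exists (Rmin a (e / (L + 1))). split; [apply Rmin_glb_lt; lra|].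
  intros y Hy. pose proof (Rmin_l a (e / (L + 1))). pose proof (Rmin_r a (e / (L + 1))).
  apply Rabs_def2 in Hy. destruct (Rle_dec x y).
  - pose proof (Hlip x y ltac:(lra) ltac:(lra)).
    assert (L * (y - x) <= L * (e / (L + 1))) by (apply Rmult_le_compat_l; lra). lra.
  - pose proof (Hlip y x ltac:(lra) ltac:(lra)). rewrite Rabs_minus_sym.
    assert (L * (x - y) <= L * (e / (L + 1))) by (apply Rmult_le_compat_l; lra). lra.
Qed.

(** A right inverse of a strictly increasing function is continuous: [g y']
    stays within [e] of [g y] as long as [y'] stays strictly between
    [f (g y - e)] and [f (g y + e)]. *)
Lemma increasing_inverse_continuous (f g : R -> R) :
  (forall x y, x < y -> f x < f y) -> (forall y, f (g y) = y) -> continuity g.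
Proof.
  intros Hm Hg. apply continuity_of_cont_at. intros y e He.
  set (x0 := g y).
  assert (H1 : f (x0 - e) < y) by (rewrite <- (Hg y); apply Hm; unfold x0; lra).
  assert (H2 : y < f (x0 + e)) by (rewrite <- (Hg y); apply Hm; unfold x0; lra).
  exists (Rmin (f (x0 + e) - y) (y - f (x0 - e))). split; [apply Rmin_glb_lt; lra|].
  intros y' Hy'. apply Rabs_def2 in Hy'. destruct Hy' as [Ha Hb].
  pose proof (Rmin_l (f (x0 + e) - y) (y - f (x0 - e))).
  pose proof (Rmin_r (f (x0 + e) - y) (y - f (x0 - e))).
  apply Rabs_def1.
  - destruct (Rlt_dec (g y' - x0) e) as [?|Hn]; [assumption|]. exfalso.
    assert (f (x0 + e) <= f (g y')).
    { destruct (Req_dec (x0 + e) (g y')) as [->|Hne]; [lra|]. left; apply Hm; lra. }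
    rewrite Hg in H3. lra.
  - destruct (Rlt_dec (- e) (g y' - x0)) as [?|Hn]; [assumption|]. exfalso.
    assert (f (g y') <= f (x0 - e)).
    { destruct (Req_dec (x0 - e) (g y')) as [->|Hne]; [lra|]. left; apply Hm; lra. }
    rewrite Hg in H3. lra.
Qed.

Lemma increasing_inverse (f : R -> R) :
  continuity f -> (forall x y, x < y -> f x < f y) ->
  (forall y, exists a b, f a <= y <= f b) ->
  exists g : R -> R, (forall y, f (g y) = y) /\ (forall x, g (f x) = x) /\
    continuity g.
Proof.
  intros Hc Hm Hs.
  assert (Hinj : forall x y, f x = f y -> x = y).
  { intros x y Hxy. destruct (Rtotal_order x y) as [H|[H|H]]; auto;
      apply Hm in H; lra. }
  assert (Hsurj : forall y, exists x, f x = y).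
  { intros y. destruct (Hs y) as [a [b [Ha Hb]]].
    destruct (Rle_lt_dec a b) as [Hab|Hab].
    - destruct (IVT_cor (fun t => f t - y) a b) as [z [_ Hz]]; [| exact Hab | |].
      + apply continuity_minus; [exact Hc | apply cont_const].
      + assert (f a - y <= 0) by lra. assert (0 <= f b - y) by lra. nra.
      + exists z; lra.
    - assert (f b < f a) by (apply Hm; exact Hab). exists a; lra. }
  set (g := fun y => proj1_sig (constructive_indefinite_description _ (Hsurj y))).
  assert (Hg : forall y, f (g y) = y).
  { intros y. unfold g. destruct (constructive_indefinite_description _ (Hsurj y)); auto. }
  exists g. split; [exact Hg|]. split; [intros x; apply Hinj; rewrite Hg; auto|].
  exact (increasing_inverse_continuous f g Hm Hg).
Qed.

Lemma homeo_halfline_of_increasing (eta : R -> R) :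
  continuity eta -> (forall x y, x < y -> eta x < eta y) -> eta 0 = 0 ->
  (forall y, exists a b, eta a <= y <= eta b) -> homeo_halfline eta.
Proof.
  intros Hc Hm H0 Hs.
  assert (Hle : forall x y, x <= y -> eta x <= eta y).
  { intros x y [H|H]; [left; apply Hm; auto| subst; lra]. }
  destruct (increasing_inverse eta Hc Hm Hs) as [g [Hg1 [Hg2 Hg3]]].
  unfold homeo_halfline, homeo_onto, nonnegR, cont_on, Rdist.
  split; [|split; [|split]].
  - intros x Hx. rewrite <- H0. apply Hle; auto.
  - intros x y _ _ Hxy. rewrite <- (Hg2 x), <- (Hg2 y), Hxy. reflexivity.
  - intros x _ e He. destruct (cont_at_of_continuity eta Hc x e He) as [d [Hd Hy]].
    exists d; split; auto.
  - exists g. split.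
    + intros y Hy. split; [|auto].
      destruct (Rlt_dec (g y) 0) as [Hl|Hl]; [|lra].
      apply Hm in Hl. rewrite Hg1, H0 in Hl. lra.
    + intros y _ e He. destruct (cont_at_of_continuity g Hg3 y e He) as [d [Hd Hy]].
      exists d; split; auto.
Qed.

Lemma pow_eventually_small (q : R) : 0 <= q < 1 ->
  forall e, 0 < e -> exists N, forall n, (n >= N)%nat -> q ^ n < e.
Proof.
  intros Hq e He. destruct (pow_lt_1_zero q) with e as [N HN];
    [rewrite Rabs_right; lra | exact He |].
  exists N. intros n Hn. specialize (HN n Hn).
  rewrite Rabs_right in HN; [exact HN | apply Rle_ge, pow_le; lra].
Qed.

Lemma pow_times_small (q m e : R) : 0 <= q < 1 -> 0 < m -> 0 < e -> exists N, q ^ N * m < e.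
Proof.
  intros Hq Hm He.
  destruct (pow_eventually_small q Hq (e / m) ltac:(apply Rdiv_lt_0_compat; lra)) as [N HN].
  exists N. specialize (HN N (le_n N)).
  apply Rmult_lt_reg_r with (/ m); [apply Rinv_0_lt_compat; lra|].
  rewrite Rmult_assoc, Rinv_r, Rmult_1_r by lra. exact HN.
Qed.

Lemma contracting_sequence_small (b : nat -> R) (q : R) :
  0 <= q < 1 -> (forall n, 0 <= b n) ->
  (forall n, b (S n) <= q * b n + (/ 2) ^ (S n)) ->
  forall e, 0 < e -> exists N, forall n, (n >= N)%nat -> b n < e.
Proof.
  intros Hq Hb Hr e He.
  destruct (pow_eventually_small (/ 2)) with (e := e * (1 - q) / 2) as [N1 HN1];
    [lra | apply Rmult_lt_0_compat; [apply Rmult_lt_0_compat|]; lra |].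
  (* past N1 the forcing terms sum to less than e/2 *)
  assert (Hk : forall k, b (N1 + k)%nat <= q ^ k * b N1 + e / 2).
  { induction k.
    - rewrite Nat.add_0_r. simpl. lra.
    - replace (N1 + S k)%nat with (S (N1 + k)) by lia.
      eapply Rle_trans; [apply Hr|].
      assert ((/ 2) ^ S (N1 + k) < e * (1 - q) / 2) by (apply HN1; lia).
      simpl in *. assert (0 <= q) by lra. nra. }
  destruct (pow_eventually_small q Hq (e / 2 / (b N1 + 1))) as [k0 Hk0].
  { apply Rdiv_lt_0_compat; [lra|]. specialize (Hb N1); lra. }
  exists (N1 + k0)%nat. intros n Hn.
  replace n with (N1 + (n - N1))%nat by lia.
  eapply Rle_lt_trans; [apply Hk|].
  specialize (Hk0 (n - N1)%nat ltac:(lia)).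
  assert (q ^ (n - N1) * b N1 < e / 2).
  { pose proof (Hb N1). pose proof (pow_le q (n - N1)).
    apply Rle_lt_trans with (q ^ (n - N1) * (b N1 + 1)); [nra|].
    apply Rmult_lt_reg_r with (/ (b N1 + 1)); [apply Rinv_0_lt_compat; lra|].
    rewrite Rmult_assoc, Rinv_r by lra. rewrite Rmult_1_r. unfold Rdiv in Hk0. lra. }
  lra.
Qed.

Lemma eventually_and (P1 P2 : nat -> Prop) :
  (exists N, forall n, (n >= N)%nat -> P1 n) ->
  (exists N, forall n, (n >= N)%nat -> P2 n) ->
  exists N, forall n, (n >= N)%nat -> P1 n /\ P2 n.
Proof.
  intros [N1 H1] [N2 H2]. exists (max N1 N2). intros n Hn.
  split; [apply H1 | apply H2]; lia.
Qed.

(** * Control functions *)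

(** The "sets of ratio pairs" [S] that can be dominated by a homeomorphism of
    [0, oo): first coordinates are nonnegative, second ones positive, the first
    coordinate is small when the second one is small, and bounded when the
    second one is bounded. *)
Definition controlled (S : R -> R -> Prop) : Prop :=
  (forall R0 r, S R0 r -> 0 <= R0 /\ 0 < r) /\
  (forall e, 0 < e -> exists tau, 0 < tau /\
     forall R0 r, S R0 r -> r <= tau -> R0 <= e) /\
  (forall T, exists K, forall R0 r, S R0 r -> r <= T -> R0 <= K).

Definition clamp01 (x : R) : R := Rmax 0 (Rmin 1 x).

Lemma clamp01_bounds x : 0 <= clamp01 x <= 1.
Proof. unfold clamp01, Rmax, Rmin. repeat destruct Rle_dec; lra. Qed.

Lemma clamp01_mono a b : a <= b -> clamp01 a <= clamp01 b.
Proof. unfold clamp01, Rmax, Rmin. repeat destruct Rle_dec; lra. Qed.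

Lemma clamp01_lipschitz a b : a <= b -> clamp01 b - clamp01 a <= b - a.
Proof. unfold clamp01, Rmax, Rmin. repeat destruct Rle_dec; lra. Qed.

Lemma clamp01_le0 a : a <= 0 -> clamp01 a = 0.
Proof. unfold clamp01, Rmax, Rmin. repeat destruct Rle_dec; lra. Qed.

Lemma clamp01_ge1 a : 1 <= a -> clamp01 a = 1.
Proof. unfold clamp01, Rmax, Rmin. repeat destruct Rle_dec; lra. Qed.

Definition weight (t r : R) : R := clamp01 (2 - r / t).

Lemma weight_bounds t r : 0 <= weight t r <= 1.
Proof. apply clamp01_bounds. Qed.

Lemma weight_far t r : 0 < t -> 2 * t <= r -> weight t r = 0.
Proof.
  intros Ht Hr. apply clamp01_le0.
  assert (2 <= r / t); [|lra].
  apply Rmult_le_reg_r with t; [exact Ht|]. unfold Rdiv.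
  rewrite Rmult_assoc, Rinv_l by lra. lra.
Qed.

Lemma weight_diag t : 0 < t -> weight t t = 1.
Proof. intros Ht. apply clamp01_ge1. unfold Rdiv. rewrite Rinv_r; lra. Qed.

Lemma weight_mono t t' r : 0 < t <= t' -> 0 <= r -> weight t r <= weight t' r.
Proof.
  intros Ht Hr. apply clamp01_mono.
  assert (r / t' <= r / t); [|lra].
  unfold Rdiv. apply Rmult_le_compat_l; [exact Hr|]. apply Rinv_le_contravar; lra.
Qed.

Lemma weight_lipschitz t t' r : 0 < t <= t' -> 0 < r < 2 * t' ->
  weight t' r - weight t r <= 2 * (t' - t) / t.
Proof.
  intros Ht Hr. unfold weight. eapply Rle_trans; [apply clamp01_lipschitz|].
  { assert (r / t' <= r / t); [|lra].
    unfold Rdiv. apply Rmult_le_compat_l; [lra|]. apply Rinv_le_contravar; lra. }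
  replace (2 - r / t' - (2 - r / t)) with (r * (t' - t) / (t * t')) by (field; lra).
  apply Rmult_le_reg_r with (t * t'); [nra|].
  replace (r * (t' - t) / (t * t') * (t * t')) with (r * (t' - t)) by (field; lra).
  replace (2 * (t' - t) / t * (t * t')) with (2 * t' * (t' - t)) by (field; lra).
  nra.
Qed.

Section Envelope.

Variable S : R -> R -> Prop.
Hypothesis HS : controlled S.

Definition weighted_values (t y : R) : Prop :=
  y = 0 \/ exists R0 r, S R0 r /\ y = R0 * weight t r.

Lemma weighted_values_ub t b : 0 < t -> 0 <= b ->
  (forall R0 r, S R0 r -> r < 2 * t -> R0 * weight t r <= b) ->
  is_upper_bound (weighted_values t) b.
Proof.
  intros Ht Hb HH y [->|[R0 [r [HSr ->]]]]; [exact Hb|].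
  destruct (Rlt_dec r (2 * t)) as [Hl|Hl]; [auto|].
  rewrite weight_far by lra. lra.
Qed.

Lemma weighted_values_bounded t : 0 < t -> bound (weighted_values t).
Proof.
  intros Ht. destruct HS as [Hpos [_ Hbd]]. destruct (Hbd (2 * t)) as [K HK].
  exists (Rmax 0 K). apply weighted_values_ub; [exact Ht | apply Rmax_l |].
  intros R0 r HSr Hr. pose proof (HK R0 r HSr ltac:(lra)). pose proof (Rmax_r 0 K).
  pose proof (weight_bounds t r). destruct (Hpos R0 r HSr). nra.
Qed.

Definition envelope (t : R) : R :=
  match Rlt_dec 0 t with
  | left Ht => proj1_sig (completeness (weighted_values t)
                 (weighted_values_bounded t Ht) (ex_intro _ 0 (or_introl eq_refl)))
  | right _ => 0
  end.

Lemma envelope_lub t : 0 < t -> is_lub (weighted_values t) (envelope t).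
Proof.
  intros Ht. unfold envelope. destruct (Rlt_dec 0 t) as [Ht'|]; [|lra].
  apply proj2_sig.
Qed.

Lemma envelope_nonpos t : t <= 0 -> envelope t = 0.
Proof. intros Ht. unfold envelope. destruct (Rlt_dec 0 t); [exfalso; lra | reflexivity]. Qed.

Lemma envelope_ge t R0 r : 0 < t -> S R0 r -> R0 * weight t r <= envelope t.
Proof. intros Ht HSr. apply (envelope_lub t Ht). right; eauto. Qed.

Lemma envelope_le t b : 0 < t -> 0 <= b ->
  (forall R0 r, S R0 r -> r < 2 * t -> R0 * weight t r <= b) -> envelope t <= b.
Proof. intros Ht Hb HH. apply (envelope_lub t Ht). apply weighted_values_ub; auto. Qed.

Lemma envelope_nonneg t : 0 <= envelope t.
Proof.
  destruct (Rlt_dec 0 t) as [Ht|Ht].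
  - apply (envelope_lub t Ht). left; reflexivity.
  - rewrite envelope_nonpos; lra.
Qed.

Lemma envelope_dominates R0 r : S R0 r -> R0 <= envelope r.
Proof.
  intros HSr. destruct (proj1 HS R0 r HSr) as [_ Hr].
  pose proof (envelope_ge r R0 r Hr HSr). rewrite weight_diag in H by exact Hr. lra.
Qed.

Lemma envelope_mono x y : x <= y -> envelope x <= envelope y.
Proof.
  intros Hxy. destruct (Rlt_dec 0 x) as [Hx|Hx];
    [|rewrite envelope_nonpos; [apply envelope_nonneg | lra]].
  apply envelope_le; [exact Hx | apply envelope_nonneg |].
  intros R0 r HSr _. eapply Rle_trans; [|apply (envelope_ge y R0 r); [lra | exact HSr]].
  destruct (proj1 HS R0 r HSr). apply Rmult_le_compat_l; [lra|]. apply weight_mono; lra.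
Qed.

Lemma envelope_lipschitz t t' K : 0 < t <= t' -> 0 <= K ->
  (forall R0 r, S R0 r -> r < 2 * t' -> R0 <= K) ->
  envelope t' <= envelope t + K * (2 * (t' - t) / t).
Proof.
  intros Ht HK0 HK.
  assert (Hd : 0 <= 2 * (t' - t) / t) by (apply Rdiv_le_0_compat; lra).
  apply envelope_le; [lra | pose proof (envelope_nonneg t); nra |].
  intros R0 r HSr Hr. destruct (proj1 HS R0 r HSr) as [HR Hr0].
  pose proof (weight_lipschitz t t' r Ht ltac:(lra)).
  pose proof (envelope_ge t R0 r (proj1 Ht) HSr). specialize (HK R0 r HSr Hr).
  nra.
Qed.

(** Near 0 only pairs with small chord ratio matter, and those have small
    mass ratio. *)
Lemma envelope_cont_at_0 : cont_at envelope 0.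
Proof.
  intros e He. destruct (proj1 (proj2 HS) (e / 2)) as [tau [Htau Hta]]; [lra|].
  exists (tau / 2). split; [lra|]. intros y Hy.
  rewrite (envelope_nonpos 0) by lra. rewrite Rminus_0_r in *.
  destruct (Rle_dec y 0) as [Hy0|Hy0].
  - rewrite envelope_nonpos, Rabs_R0 by exact Hy0. exact He.
  - rewrite Rabs_right in * by (try apply Rle_ge, envelope_nonneg; lra).
    apply Rle_lt_trans with (e / 2); [|lra]. apply envelope_le; [lra | lra |].
    intros R0 r HSr Hr. pose proof (Hta R0 r HSr ltac:(lra)).
    pose proof (weight_bounds y r). destruct (proj1 HS R0 r HSr). nra.
Qed.

Lemma envelope_window_lipschitz x : 0 < x -> exists L, 0 <= L /\
  forall t t', x - x / 2 <= t <= t' -> t' <= x + x / 2 ->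
    Rabs (envelope t' - envelope t) <= L * (t' - t).
Proof.
  intros Hx. destruct (proj2 (proj2 HS) (3 * x)) as [K0 HK0].
  set (K := Rmax 0 K0). assert (HK : 0 <= K) by apply Rmax_l.
  exists (4 * K / x). split; [apply Rdiv_le_0_compat; lra|].
  intros t t' Ht Ht'.
  rewrite Rabs_right by (pose proof (envelope_mono t t' ltac:(lra)); lra).
  assert (Hl : envelope t' <= envelope t + K * (2 * (t' - t) / t)).
  { apply envelope_lipschitz; [lra | exact HK |]. intros R0 r HSr Hr.
    eapply Rle_trans; [apply (HK0 R0 r HSr); lra | apply Rmax_r]. }
  assert (K * (2 * (t' - t) / t) <= 4 * K / x * (t' - t)); [|lra].
  apply Rmult_le_reg_r with (t * x); [nra|].
  replace (K * (2 * (t' - t) / t) * (t * x)) with (2 * K * (t' - t) * x) by (field; lra).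
  replace (4 * K / x * (t' - t) * (t * x)) with (4 * K * (t' - t) * t) by (field; lra).
  assert (0 <= K * (t' - t)) by (apply Rmult_le_pos; lra). nra.
Qed.

Lemma envelope_continuous : continuity envelope.
Proof.
  apply continuity_of_cont_at. intros x.
  destruct (Rtotal_order x 0) as [Hx|[->|Hx]].
  - intros e He. exists (- x). split; [lra|]. intros y Hy. apply Rabs_def2 in Hy.
    rewrite !envelope_nonpos by lra. rewrite Rminus_diag, Rabs_R0. exact He.
  - exact envelope_cont_at_0.
  - destruct (envelope_window_lipschitz x Hx) as [L [HL Hlip]].
    apply (cont_at_of_local_lipschitz envelope x (x / 2) L); [lra | exact HL | exact Hlip].
Qed.

End Envelope.

Definition profile (F : R -> R) : Prop :=
  continuity F /\ (forall x y, x <= y -> F x <= F y) /\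
  (forall t, t <= 0 -> F t = 0) /\ (forall t, 0 <= F t).

Lemma envelope_profile S (HS : controlled S) : profile (envelope S HS).
Proof.
  split; [apply envelope_continuous|]. split; [apply envelope_mono|].
  split; [apply envelope_nonpos | apply envelope_nonneg].
Qed.

Lemma shift_profile_homeo F : profile F -> homeo_halfline (fun t => t + F t).
Proof.
  intros [Fc [Fm [F0 Fp]]]. apply homeo_halfline_of_increasing.
  - apply cont_add; [apply cont_id | exact Fc].
  - intros x y Hxy. pose proof (Fm x y ltac:(lra)). lra.
  - rewrite F0; lra.
  - intros y. exists (Rmin y 0), (Rmax y 0).
    rewrite (F0 (Rmin y 0)) by apply Rmin_r. pose proof (Fp (Rmax y 0)).
    pose proof (Rmin_l y 0). pose proof (Rmax_l y 0). lra.
Qed.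

Definition saturation (t : R) : R := t / (1 + Rabs t).

Lemma saturation_increasing x y : x < y -> saturation x < saturation y.
Proof.
  intros Hxy. unfold saturation. pose proof (Rabs_pos x). pose proof (Rabs_pos y).
  apply Rmult_lt_reg_r with ((1 + Rabs x) * (1 + Rabs y)); [nra|].
  replace (x / (1 + Rabs x) * ((1 + Rabs x) * (1 + Rabs y))) with (x * (1 + Rabs y)) by (field; lra).
  replace (y / (1 + Rabs y) * ((1 + Rabs x) * (1 + Rabs y))) with (y * (1 + Rabs x)) by (field; lra).
  destruct (Rle_dec 0 x); destruct (Rle_dec 0 y);
    [rewrite (Rabs_right x), (Rabs_right y) | rewrite (Rabs_right x), (Rabs_left y)
    | rewrite (Rabs_left x), (Rabs_right y) | rewrite (Rabs_left x), (Rabs_left y)]; nra.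
Qed.

Lemma saturation_bounds t : 0 <= t -> 0 <= saturation t <= 1.
Proof.
  intros Ht. unfold saturation. rewrite Rabs_right by lra. split.
  - apply Rdiv_le_0_compat; lra.
  - apply Rmult_le_reg_r with (1 + t); [lra|]. unfold Rdiv.
    rewrite Rmult_assoc, Rinv_l by lra. lra.
Qed.

Lemma saturation_nonpos t : t <= 0 -> saturation t <= 0.
Proof.
  intros Ht. unfold saturation. rewrite Rabs_left1 by lra. unfold Rdiv.
  assert (0 < / (1 + - t)) by (apply Rinv_0_lt_compat; lra). nra.
Qed.

Lemma cont_saturation : continuity saturation.
Proof.
  apply cont_mul; [apply cont_id|]. apply cont_inv.
  - apply cont_add; [apply cont_const | apply cont_abs, cont_id].
  - intros x. pose proof (Rabs_pos x). lra.
Qed.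

Section NearIdentity.

Variables (F : R -> R) (s : R).
Hypothesis HF : profile F.
Hypothesis Hs : 0 < s.

(** [ceiling t] is at least [t + s/2], and at least [F t] once [t >= 2/s]. *)
Definition ceiling (t : R) : R := t + s / 2 + F t * Rmax 0 (t * s - 1).

(** A homeomorphism of [0, oo) which stays below [t + s] on [[0, 1/s]] and
    dominates [min (F t) (t + s/2)] everywhere and [F t] for [t >= 2/s]. *)
Definition near_identity (t : R) : R :=
  Rmin (F t) (ceiling t) + s / 2 * saturation t + Rmax 0 (t - 1 / s).

Lemma ceiling_mono x y : x <= y -> ceiling x <= ceiling y.
Proof.
  intros Hxy. destruct HF as [_ [Fm [_ Fp]]]. unfold ceiling.
  pose proof (Fm x y Hxy). pose proof (Fp x).
  assert (Rmax 0 (x * s - 1) <= Rmax 0 (y * s - 1)) by (apply Rle_max_compat_l; nra).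
  pose proof (Rmax_l 0 (x * s - 1)). nra.
Qed.

Lemma near_identity_at_0 : near_identity 0 = 0.
Proof.
  destruct HF as [_ [_ [F0 _]]]. unfold near_identity, ceiling, saturation.
  rewrite F0 by lra. rewrite Rabs_R0.
  assert (0 < 1 / s) by (apply Rdiv_lt_0_compat; lra).
  unfold Rmin, Rmax. repeat destruct Rle_dec; lra.
Qed.

Lemma near_identity_continuous : continuity near_identity.
Proof.
  destruct HF as [Fc _]. apply cont_add; [apply cont_add|].
  - apply cont_min; [exact Fc|]. unfold ceiling.
    apply cont_add; [apply cont_add; [apply cont_id | apply cont_const]|].
    apply cont_mul; [exact Fc|]. apply cont_max; [apply cont_const|].
    apply cont_add; [apply cont_mul; [apply cont_id | apply cont_const] | apply cont_const].
  - apply cont_mul; [apply cont_const | apply cont_saturation].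
  - apply cont_max; [apply cont_const|]. apply cont_add; [apply cont_id | apply cont_const].
Qed.

(** Strictly increasing thanks to the saturation term, onto thanks to the
    saturation term (downwards) and the last term (upwards). *)
Lemma near_identity_homeo : homeo_halfline near_identity.
Proof.
  destruct HF as [Fc [Fm [F0 Fp]]].
  assert (Hs1 : 0 < 1 / s) by (apply Rdiv_lt_0_compat; lra).
  apply homeo_halfline_of_increasing; [exact near_identity_continuous | | |].
  - intros x y Hxy. unfold near_identity. pose proof (saturation_increasing x y Hxy).
    assert (Rmin (F x) (ceiling x) <= Rmin (F y) (ceiling y)).
    { pose proof (Fm x y ltac:(lra)). pose proof (ceiling_mono x y ltac:(lra)).
      unfold Rmin. repeat destruct Rle_dec; lra. }
    assert (Rmax 0 (x - 1 / s) <= Rmax 0 (y - 1 / s)) by (apply Rle_max_compat_l; lra).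
    nra.
  - exact near_identity_at_0.
  - intros y. destruct (Rle_dec 0 y) as [Hy|Hy].
    + (* upwards, the last term alone grows like t - 1/s *)
      exists 0, (y + 1 / s). rewrite near_identity_at_0. split; [exact Hy|].
      unfold near_identity. pose proof (saturation_bounds (y + 1 / s) ltac:(lra)).
      assert (0 <= Rmin (F (y + 1 / s)) (ceiling (y + 1 / s))).
      { apply Rmin_glb; [apply Fp|]. unfold ceiling. pose proof (Fp (y + 1 / s)).
        pose proof (Rmax_l 0 ((y + 1 / s) * s - 1)). nra. }
      pose proof (Rmax_r 0 (y + 1 / s - 1 / s)). nra.
    + (* downwards, the saturation term reaches any negative value *)
      exists (y - s / 2), 0. rewrite near_identity_at_0. split; [|lra].
      unfold near_identity, ceiling. rewrite F0 by lra.
      rewrite (Rmax_left 0 (y - s / 2 - 1 / s)) by lra. rewrite !Rmult_0_l, !Rplus_0_r.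
      pose proof (saturation_nonpos (y - s / 2) ltac:(lra)).
      pose proof (Rmin_r 0 (y - s / 2 + s / 2)). nra.
Qed.

Lemma near_identity_small t : 0 <= t <= 1 / s -> near_identity t <= t + s.
Proof.
  intros [Ht1 Ht2]. unfold near_identity. pose proof (saturation_bounds t Ht1).
  assert (t * s <= 1).
  { apply Rmult_le_reg_r with (/ s); [apply Rinv_0_lt_compat; lra|].
    rewrite Rmult_assoc, Rinv_r, Rmult_1_r by lra. unfold Rdiv in Ht2. lra. }
  rewrite (Rmax_left 0 (t - 1 / s)) by lra.
  assert (Rmin (F t) (ceiling t) <= t + s / 2).
  { eapply Rle_trans; [apply Rmin_r|]. unfold ceiling. rewrite Rmax_left by lra. lra. }
  nra.
Qed.

Lemma near_identity_dominates R0 r : 0 <= R0 -> 0 < r -> R0 <= F r ->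
  (r <= 2 / s -> R0 <= r + s / 2) -> R0 <= near_identity r.
Proof.
  intros HR Hr HRF Hclose. destruct HF as [_ [_ [_ Fp]]]. unfold near_identity.
  pose proof (saturation_bounds r ltac:(lra)). pose proof (Rmax_l 0 (r - 1 / s)).
  assert (R0 <= Rmin (F r) (ceiling r)); [|nra].
  apply Rmin_glb; [exact HRF|]. unfold ceiling.
  pose proof (Fp r). pose proof (Rmax_l 0 (r * s - 1)).
  destruct (Rle_dec r (2 / s)) as [Hl|Hl].
  - pose proof (Hclose Hl). nra.
  - assert (1 <= r * s - 1); [|pose proof (Rmax_r 0 (r * s - 1)); nra].
    assert (2 < r * s); [|lra].
    apply Rmult_lt_reg_r with (/ s); [apply Rinv_0_lt_compat; lra|].
    rewrite Rmult_assoc, Rinv_r, Rmult_1_r by lra. unfold Rdiv in Hl. lra.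
Qed.

End NearIdentity.

(** * Increments of doubling and Zygmund functions *)

(** The distribution function [u] of the measure and the Zygmund function [v]
    only enter through the following three properties. *)
Definition strictly_increasing (u : R -> R) : Prop := forall x y, x < y -> u x < u y.

Definition doubling_fn (u : R -> R) (d : R) : Prop :=
  forall x h, 0 < h ->
    u x - u (x - h) <= (1 + d) * (u (x + h) - u x) /\
    u (x + h) - u x <= (1 + d) * (u x - u (x - h)).

Definition zygmund_fn (u w : R -> R) (K : R) : Prop :=
  forall x h, 0 < h ->
    Rabs (w (x + h) - 2 * w x + w (x - h)) <= K * (u (x + h) - u (x - h)).

Definition mass (u : R -> R) (x H : R) : R := Rabs (u (x + H) - u x).

(** Halving an interval at its endpoint [x] multiplies its mass by at most
    this factor, which lies in [[1/2, 1)]. *)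
Definition half_ratio (d : R) : R := (1 + d) / (2 + d).

Lemma mass_nonneg u x H : 0 <= mass u x H.
Proof. apply Rabs_pos. Qed.

Lemma half_ratio_bounds d : 0 < d -> 1 / 2 <= half_ratio d < 1.
Proof.
  intros Hd. unfold half_ratio.
  split; apply Rmult_le_reg_r with (2 + d) || apply Rmult_lt_reg_r with (2 + d); try lra;
    replace ((1 + d) / (2 + d) * (2 + d)) with (1 + d) by (field; lra); lra.
Qed.

Lemma half_ratio_le d : 0 < d -> d <= 1 -> half_ratio d <= 2 / 3.
Proof.
  intros. unfold half_ratio. apply Rmult_le_reg_r with (2 + d); [lra|].
  replace ((1 + d) / (2 + d) * (2 + d)) with (1 + d) by (field; lra). lra.
Qed.

Lemma scale_sign Ha Hb : Ha <> 0 ->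
  Hb = (Rabs Hb / Rabs Ha) * Ha \/ Hb = - ((Rabs Hb / Rabs Ha) * Ha).
Proof.
  intros H. destruct (Rle_dec 0 Ha); destruct (Rle_dec 0 Hb);
  [rewrite (Rabs_right Ha), (Rabs_right Hb) | rewrite (Rabs_right Ha), (Rabs_left Hb)
  | rewrite (Rabs_left Ha), (Rabs_right Hb) | rewrite (Rabs_left Ha), (Rabs_left Hb)];
  try lra; [left|right|right|left]; field; lra.
Qed.

Lemma scale_upper Ha Hb c : Ha <> 0 -> Rabs Hb <= c * Rabs Ha ->
  0 <= Rabs Hb / Rabs Ha <= c.
Proof.
  intros H Hc. pose proof (Rabs_pos_lt Ha H). split.
  - apply Rdiv_le_0_compat; [apply Rabs_pos | auto].
  - apply Rmult_le_reg_r with (Rabs Ha); [auto|].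
    replace (Rabs Hb / Rabs Ha * Rabs Ha) with (Rabs Hb) by (field; lra). lra.
Qed.

Lemma scale_lower Ha Hb c : Ha <> 0 -> c * Rabs Ha <= Rabs Hb -> c <= Rabs Hb / Rabs Ha.
Proof.
  intros H Hc. pose proof (Rabs_pos_lt Ha H).
  apply Rmult_le_reg_r with (Rabs Ha); [auto|].
  replace (Rabs Hb / Rabs Ha * Rabs Ha) with (Rabs Hb) by (field; lra). lra.
Qed.

Lemma euclid_ge_l a b : Rabs a <= sqrt (a ^ 2 + b ^ 2).
Proof.
  rewrite <- sqrt_Rsqr_abs. apply sqrt_le_1_alt.
  pose proof (pow2_ge_0 b). unfold Rsqr. simpl in *. lra.
Qed.

Lemma euclid_ge_r a b : Rabs b <= sqrt (a ^ 2 + b ^ 2).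
Proof. rewrite Rplus_comm. apply euclid_ge_l. Qed.

Lemma euclid_perturb p q e f :
  sqrt ((p + e) ^ 2 + (q + f) ^ 2) <= sqrt (p ^ 2 + q ^ 2) + Rabs e + Rabs f.
Proof.
  set (n := sqrt (p ^ 2 + q ^ 2)).
  assert (Hn0 : 0 <= n) by apply sqrt_pos.
  assert (Hn2 : n * n = p ^ 2 + q ^ 2) by (apply sqrt_sqrt; nra).
  pose proof (euclid_ge_l p q) as Hp. pose proof (euclid_ge_r p q) as Hq. fold n in Hp, Hq.
  assert (Hpe : p * e <= n * Rabs e).
  { apply Rle_trans with (Rabs (p * e)); [apply Rle_abs|].
    rewrite Rabs_mult. apply Rmult_le_compat_r; [apply Rabs_pos | exact Hp]. }
  assert (Hqf : q * f <= n * Rabs f).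
  { apply Rle_trans with (Rabs (q * f)); [apply Rle_abs|].
    rewrite Rabs_mult. apply Rmult_le_compat_r; [apply Rabs_pos | exact Hq]. }
  assert (He2 : e ^ 2 = Rabs e * Rabs e) by (rewrite <- pow2_abs; ring).
  assert (Hf2 : f ^ 2 = Rabs f * Rabs f) by (rewrite <- pow2_abs; ring).
  pose proof (Rabs_pos e). pose proof (Rabs_pos f).
  rewrite <- (sqrt_Rsqr (n + Rabs e + Rabs f)) by lra.
  apply sqrt_le_1_alt. unfold Rsqr. nra.
Qed.

Lemma euclid_perturb_rev p q e f :
  sqrt (p ^ 2 + q ^ 2) <= sqrt ((p + e) ^ 2 + (q + f) ^ 2) + Rabs e + Rabs f.
Proof.
  pose proof (euclid_perturb (p + e) (q + f) (- e) (- f)) as H.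
  rewrite !Rabs_Ropp in H. replace (p + e + - e) with p in H by ring.
  replace (q + f + - f) with q in H by ring. exact H.
Qed.

Lemma euclid_le_sum a b : sqrt (a ^ 2 + b ^ 2) <= Rabs a + Rabs b.
Proof.
  pose proof (euclid_perturb 0 0 a b) as H. rewrite !Rplus_0_l in H.
  replace (0 ^ 2 + 0 ^ 2) with 0 in H by ring. rewrite sqrt_0 in H. lra.
Qed.

Lemma euclid_scale k b H : sqrt ((k * H) ^ 2 + (b * H) ^ 2) = sqrt (k ^ 2 + b ^ 2) * Rabs H.
Proof.
  replace ((k * H) ^ 2 + (b * H) ^ 2) with ((k ^ 2 + b ^ 2) * (H * H)) by ring.
  rewrite sqrt_mult_alt by nra. f_equal. rewrite <- sqrt_Rsqr_abs. reflexivity.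
Qed.

Definition chord (u v : R -> R) (x H : R) : R :=
  sqrt ((u x - u (x + H)) ^ 2 + (v x - v (x + H)) ^ 2).

Lemma chord_ge_mass u v x H : mass u x H <= chord u v x H.
Proof. unfold chord, mass. rewrite Rabs_minus_sym. apply euclid_ge_l. Qed.

Lemma chord_ge_vertical u v x H : Rabs (v (x + H) - v x) <= chord u v x H.
Proof. unfold chord. rewrite Rabs_minus_sym. apply euclid_ge_r. Qed.

Lemma chord_le_sum u v x H : chord u v x H <= mass u x H + Rabs (v (x + H) - v x).
Proof.
  unfold chord, mass. rewrite (Rabs_minus_sym (u (x + H))), (Rabs_minus_sym (v (x + H))).
  apply euclid_le_sum.
Qed.

(** The pairs (ratio of masses, ratio of chord lengths) over all triples of
    parameters [x], [x + Ha], [x + Hb]: quasisymmetry of the projection means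
    the first coordinate is bounded by [eta] of the second. *)
Definition ratio_pairs (u v : R -> R) (R0 r : R) : Prop :=
  exists x Ha Hb, Ha <> 0 /\ Hb <> 0 /\
    R0 = mass u x Ha / mass u x Hb /\ r = chord u v x Ha / chord u v x Hb.

Lemma second_difference_max_principle (f : R -> R) (B : R) :
  continuity f -> f 0 = 0 -> f 1 = 0 -> 0 <= B ->
  (forall l h, 0 < h -> h <= l -> l + h <= 1 -> 2 * f l - f (l + h) - f (l - h) <= B) ->
  forall lam, 0 <= lam <= 1 -> f lam <= B.
Proof.
  intros Hf Hf0 Hf1 HB Hsd lam Hlam.
  destruct (Rle_dec (f lam) B) as [Hok|Hbad]; [exact Hok|]. exfalso.
  destruct (continuity_ab_maj f 0 1 ltac:(lra) (fun c _ => Hf c)) as [l0 [Hmax Hl0]].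
  pose proof (Hmax lam Hlam) as Hm.
  (* the maximum is positive, hence attained inside (0, 1) *)
  assert (Hin : 0 < l0 < 1).
  { destruct Hl0 as [[A1|A1] [A2|A2]]; subst; try lra. }
  set (h := Rmin l0 (1 - l0)).
  assert (Hh : 0 < h) by (apply Rmin_glb_lt; lra).
  assert (Hh1 : h <= l0) by apply Rmin_l. assert (Hh2 : h <= 1 - l0) by apply Rmin_r.
  (* one of [l0 +- h] is an endpoint, the other one lies in [[0, 1]] *)
  assert (Hend : f (l0 + h) + f (l0 - h) <= f l0).
  { unfold h, Rmin in *. destruct Rle_dec.
    - replace (l0 - l0) with 0 by ring. rewrite Hf0, Rplus_0_r. apply Hmax; lra.
    - replace (l0 + (1 - l0)) with 1 by ring. rewrite Hf1, Rplus_0_l. apply Hmax; lra. }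
  pose proof (Hsd l0 h Hh Hh1 ltac:(lra)). lra.
Qed.

Section GraphGeometry.

Variables (u : R -> R) (d : R).
Hypothesis Hu : strictly_increasing u.
Hypothesis Hd : doubling_fn u d.
Hypothesis Hd0 : 0 < d.

Lemma increasing_le x y : x <= y -> u x <= u y.
Proof. intros [H|H]; [left; apply Hu; auto | subst; lra]. Qed.

Lemma mass_pos x H : H <> 0 -> 0 < mass u x H.
Proof.
  intros HH. unfold mass. destruct (Rlt_dec 0 H).
  - pose proof (Hu x (x + H) ltac:(lra)). rewrite Rabs_right; lra.
  - pose proof (Hu (x + H) x ltac:(lra)). rewrite Rabs_left; lra.
Qed.

Lemma mass_right x H : 0 <= H -> mass u x H = u (x + H) - u x.
Proof.
  intros HH. unfold mass. rewrite Rabs_right; [reflexivity|].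
  pose proof (increasing_le x (x + H) ltac:(lra)). lra.
Qed.

Lemma mass_left x H : H <= 0 -> mass u x H = u x - u (x + H).
Proof.
  intros HH. unfold mass. rewrite Rabs_left1; [ring|].
  pose proof (increasing_le (x + H) x ltac:(lra)). lra.
Qed.

Lemma mass_scale x H c c' : 0 <= c <= c' -> mass u x (c * H) <= mass u x (c' * H).
Proof.
  intros Hc. destruct (Rle_dec 0 H).
  - rewrite !mass_right by nra. pose proof (increasing_le (x + c * H) (x + c' * H) ltac:(nra)). lra.
  - rewrite !mass_left by nra. pose proof (increasing_le (x + c' * H) (x + c * H) ltac:(nra)). lra.
Qed.

(** Halving, in both directions: consequences of doubling at [x + H/2]. *)
Lemma mass_half x H :
  mass u x (H / 2) <= half_ratio d * mass u x H /\ mass u x H <= (2 + d) * mass u x (H / 2).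
Proof.
  unfold half_ratio. destruct (Rtotal_order H 0) as [Hn|[Hz|Hp]].
  - destruct (Hd (x + H / 2) (- (H / 2)) ltac:(lra)) as [D1 D2].
    replace (x + H / 2 - - (H / 2)) with (x + H) in * by field.
    replace (x + H / 2 + - (H / 2)) with x in * by field.
    rewrite !mass_left by lra. split; [|lra].
    apply Rmult_le_reg_r with (2 + d); [lra|].
    replace ((1 + d) / (2 + d) * (u x - u (x + H)) * (2 + d))
      with ((1 + d) * (u x - u (x + H))) by (field; lra).
    lra.
  - subst H. unfold mass. replace (x + 0 / 2) with x by field. replace (x + 0) with x by ring.
    rewrite Rminus_diag, Rabs_R0. lra.
  - destruct (Hd (x + H / 2) (H / 2) ltac:(lra)) as [D1 D2].
    replace (x + H / 2 + H / 2) with (x + H) in * by field.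
    replace (x + H / 2 - H / 2) with x in * by field.
    rewrite !mass_right by lra. split; [|lra].
    apply Rmult_le_reg_r with (2 + d); [lra|].
    replace ((1 + d) / (2 + d) * (u (x + H) - u x) * (2 + d))
      with ((1 + d) * (u (x + H) - u x)) by (field; lra).
    lra.
Qed.

Lemma mass_reflect x H : mass u x (- H) <= (1 + d) * mass u x H.
Proof.
  destruct (Rtotal_order H 0) as [Hn|[Hz|Hp]].
  - destruct (Hd x (- H) ltac:(lra)) as [D1 D2].
    rewrite mass_right, mass_left by lra. replace (x - - H) with (x + H) in * by field. lra.
  - subst. unfold mass. rewrite Ropp_0, Rplus_0_r, Rminus_diag, Rabs_R0. lra.
  - destruct (Hd x H ltac:(lra)) as [D1 D2].
    rewrite (mass_left x (- H)), (mass_right x H) by lra. replace (x + - H) with (x - H) by ring. lra.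
Qed.

Lemma mass_dyadic x H n :
  mass u x ((/ 2) ^ n * H) <= half_ratio d ^ n * mass u x H /\
  mass u x H <= (2 + d) ^ n * mass u x ((/ 2) ^ n * H).
Proof.
  pose proof (half_ratio_bounds d Hd0).
  induction n as [|n [I1 I2]]; [simpl; rewrite Rmult_1_l; lra|].
  destruct (mass_half x ((/ 2) ^ n * H)) as [J1 J2].
  replace ((/ 2) ^ n * H / 2) with ((/ 2) ^ S n * H) in * by (simpl; field).
  pose proof (mass_nonneg u x ((/ 2) ^ S n * H)). pose proof (mass_nonneg u x ((/ 2) ^ n * H)).
  change (half_ratio d ^ S n) with (half_ratio d * half_ratio d ^ n).
  change ((2 + d) ^ S n) with ((2 + d) * (2 + d) ^ n).
  assert (0 <= (2 + d) ^ n) by (apply pow_le; lra). split; nra.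
Qed.

Lemma mass_scaled x H lam n : 0 <= lam <= (/ 2) ^ n ->
  mass u x (lam * H) <= half_ratio d ^ n * mass u x H.
Proof.
  intros Hlam. pose proof (mass_scale x H lam ((/ 2) ^ n) Hlam).
  destruct (mass_dyadic x H n) as [I1 _]. lra.
Qed.

Lemma mass_upper x Ha Hb n : Ha <> 0 -> Rabs Hb <= (/ 2) ^ n * Rabs Ha ->
  mass u x Hb <= (1 + d) * half_ratio d ^ n * mass u x Ha.
Proof.
  intros HA Hl. pose proof (scale_upper Ha Hb _ HA Hl) as Hlam.
  set (lam := Rabs Hb / Rabs Ha) in *.
  pose proof (mass_scaled x Ha lam n Hlam). pose proof (mass_nonneg u x (lam * Ha)).
  assert (mass u x Hb <= (1 + d) * mass u x (lam * Ha)).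
  { destruct (scale_sign Ha Hb HA) as [E|E]; fold lam in E; rewrite E; [nra | apply mass_reflect]. }
  nra.
Qed.

Lemma mass_lower x Ha Hb n : Ha <> 0 -> (/ 2) ^ n * Rabs Ha <= Rabs Hb ->
  mass u x Ha <= (1 + d) * (2 + d) ^ n * mass u x Hb.
Proof.
  intros HA Hl. pose proof (scale_lower Ha Hb _ HA Hl) as Hlam.
  set (lam := Rabs Hb / Rabs Ha) in *.
  assert (0 <= (/ 2) ^ n) by (apply pow_le; lra).
  assert (0 <= (2 + d) ^ n) by (apply pow_le; lra).
  pose proof (mass_scale x Ha ((/ 2) ^ n) lam ltac:(lra)).
  destruct (mass_dyadic x Ha n) as [_ I2].
  assert (mass u x (lam * Ha) <= (1 + d) * mass u x Hb).
  { destruct (scale_sign Ha Hb HA) as [E|E]; fold lam in E; rewrite E.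
    - pose proof (mass_nonneg u x (lam * Ha)). nra.
    - pose proof (mass_reflect x (- (lam * Ha))). rewrite Ropp_involutive in *. auto. }
  nra.
Qed.

Lemma increment_le_mass x y r : Rabs (y - x) <= r ->
  Rabs (u y - u x) <= mass u x r + mass u x (- r).
Proof.
  intros Hy. apply Rabs_le_between in Hy.
  pose proof (mass_nonneg u x r). pose proof (mass_nonneg u x (- r)).
  destruct (Rle_dec x y).
  - rewrite mass_right by lra. pose proof (increasing_le x y r0).
    pose proof (increasing_le y (x + r) ltac:(lra)). rewrite Rabs_right by lra. lra.
  - rewrite (mass_left x (- r)) by lra. pose proof (increasing_le y x ltac:(lra)).
    pose proof (increasing_le (x + - r) y ltac:(lra)). rewrite Rabs_left1 by lra. lra.
Qed.

(** Doubling increments are continuous: masses of dyadically shrinking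
    intervals decay geometrically. *)
Lemma doubling_continuous : continuity u.
Proof.
  apply continuity_of_cont_at. intros x e He. pose proof (half_ratio_bounds d Hd0).
  set (m := mass u x 1 + mass u x (-1) + 1).
  assert (Hm : 0 < m)
    by (unfold m; pose proof (mass_nonneg u x 1); pose proof (mass_nonneg u x (-1)); lra).
  destruct (pow_times_small (half_ratio d) m e ltac:(lra) Hm He) as [N HN].
  assert (Hp : 0 < (/ 2) ^ N) by (apply pow_lt; lra).
  destruct (mass_dyadic x 1 N) as [I1 _]. destruct (mass_dyadic x (-1) N) as [I2 _].
  rewrite Rmult_1_r in I1. replace ((/ 2) ^ N * -1) with (- (/ 2) ^ N) in I2 by ring.
  assert (0 <= half_ratio d ^ N) by (apply pow_le; lra).
  exists ((/ 2) ^ N). split; [exact Hp|]. intros y Hy.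
  eapply Rle_lt_trans; [apply increment_le_mass; left; exact Hy|].
  unfold m in HN. nra.
Qed.

(** Doubling increments are unbounded in both directions: masses of
    dyadically growing intervals grow geometrically. *)
Lemma doubling_unbounded y : exists a b, u a <= y <= u b.
Proof.
  pose proof (half_ratio_bounds d Hd0).
  set (c := Rmin (mass u 0 1) (mass u 0 (-1))).
  assert (Hc : 0 < c) by (apply Rmin_glb_lt; apply mass_pos; lra).
  set (Y := Rabs (y - u 0) + 1).
  assert (HY : 0 < Y) by (unfold Y; pose proof (Rabs_pos (y - u 0)); lra).
  destruct (pow_times_small (half_ratio d) Y c ltac:(lra) HY Hc) as [N HN].
  assert (Hpw : 0 < half_ratio d ^ N) by (apply pow_lt; lra).
  assert (Hinv : (/ 2) ^ N * 2 ^ N = 1) by (rewrite <- Rpow_mult_distr, Rinv_l, pow1; lra).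
  assert (Hgrow : forall sg, sg = 1 \/ sg = -1 -> Y < mass u 0 (sg * 2 ^ N)).
  { intros sg Hsg. destruct (mass_dyadic 0 (sg * 2 ^ N) N) as [I _].
    replace ((/ 2) ^ N * (sg * 2 ^ N)) with sg in I
      by (replace ((/ 2) ^ N * (sg * 2 ^ N)) with (sg * ((/ 2) ^ N * 2 ^ N)) by ring;
          rewrite Hinv; ring).
    assert (c <= mass u 0 sg) by (destruct Hsg as [E|E]; rewrite E; [apply Rmin_l | apply Rmin_r]).
    apply Rmult_lt_reg_l with (half_ratio d ^ N); [exact Hpw | lra]. }
  pose proof (Hgrow 1 (or_introl eq_refl)) as Hr. pose proof (Hgrow (-1) (or_intror eq_refl)) as Hl.
  assert (Hp : 0 < 2 ^ N) by (apply pow_lt; lra).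
  rewrite mass_right in Hr by lra. rewrite mass_left in Hl by lra.
  pose proof (Rle_abs (y - u 0)). pose proof (Rle_abs (- (y - u 0))). rewrite Rabs_Ropp in *.
  exists (0 + -1 * 2 ^ N), (0 + 1 * 2 ^ N). unfold Y in *. lra.
Qed.

Lemma mass_inner x H a b : 0 <= a <= b -> b <= 1 ->
  Rabs (u (x + b * H) - u (x + a * H)) <= mass u x H.
Proof.
  intros Hab Hb1. unfold mass. destruct (Rle_dec 0 H).
  - pose proof (increasing_le (x + a * H) (x + b * H) ltac:(nra)).
    pose proof (increasing_le x (x + a * H) ltac:(nra)).
    pose proof (increasing_le (x + b * H) (x + H) ltac:(nra)).
    rewrite !Rabs_right by lra. lra.
  - pose proof (increasing_le (x + b * H) (x + a * H) ltac:(nra)).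
    pose proof (increasing_le (x + a * H) x ltac:(nra)).
    pose proof (increasing_le (x + H) (x + b * H) ltac:(nra)).
    rewrite !Rabs_left1 by lra. lra.
Qed.

Section Chords.

Variables (w : R -> R) (K : R).
Hypothesis Hz : zygmund_fn u w K.
Hypothesis HK : 0 <= K.

Lemma zygmund_second_difference y k :
  Rabs (w (y + k) - 2 * w y + w (y - k)) <= K * Rabs (u (y + k) - u (y - k)).
Proof.
  destruct (Rtotal_order k 0) as [Hk|[->|Hk]].
  - pose proof (Hz y (- k) ltac:(lra)) as Z.
    replace (y - - k) with (y + k) in Z by ring. replace (y + - k) with (y - k) in Z by ring.
    pose proof (Hu (y + k) (y - k) ltac:(lra)).
    rewrite (Rabs_left (u (y + k) - u (y - k))) by lra.
    replace (w (y + k) - 2 * w y + w (y - k)) with (w (y - k) - 2 * w y + w (y + k)) by ring.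
    lra.
  - rewrite Rplus_0_r, Rminus_0_r. replace (w y - 2 * w y + w y) with 0 by ring.
    rewrite Rabs_R0. apply Rmult_le_pos; [exact HK | apply Rabs_pos].
  - pose proof (Hz y k Hk). pose proof (Hu (y - k) (y + k) ltac:(lra)).
    rewrite (Rabs_right (u (y + k) - u (y - k))) by lra. exact H.
Qed.

Definition chord_defect (x H l : R) : R := w (x + l * H) - w x - l * (w (x + H) - w x).

Hypothesis Hw : continuity w.

(** Second differences of the chord defect are second differences of [w] on
    a sub-interval. *)
Lemma chord_defect_second_difference x H l h : 0 < h -> h <= l -> l + h <= 1 ->
  Rabs (2 * chord_defect x H l - chord_defect x H (l + h) - chord_defect x H (l - h))
    <= K * mass u x H.
Proof.
  intros Hh Hhl Hl1. set (y := x + l * H).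
  replace (2 * chord_defect x H l - chord_defect x H (l + h) - chord_defect x H (l - h))
    with (- (w (y + h * H) - 2 * w y + w (y - h * H))).
  2: { unfold chord_defect, y.
       replace (x + (l + h) * H) with (x + l * H + h * H) by ring.
       replace (x + (l - h) * H) with (x + l * H - h * H) by ring. ring. }
  rewrite Rabs_Ropp. eapply Rle_trans; [apply zygmund_second_difference|].
  apply Rmult_le_compat_l; [exact HK|]. unfold y.
  replace (x + l * H + h * H) with (x + (l + h) * H) by ring.
  replace (x + l * H - h * H) with (x + (l - h) * H) by ring.
  apply mass_inner; lra.
Qed.

Lemma zygmund_chord x H lam : 0 <= lam <= 1 ->
  Rabs (w (x + lam * H) - w x - lam * (w (x + H) - w x)) <= K * mass u x H.
Proof.
  intros Hlam. change (Rabs (chord_defect x H lam) <= K * mass u x H).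
  assert (Hc : continuity (chord_defect x H)).
  { unfold chord_defect. apply cont_add; [apply cont_add|].
    - apply (continuity_comp (fun l => x + l * H) w); [|exact Hw].
      apply cont_add; [apply cont_const | apply cont_mul; [apply cont_id | apply cont_const]].
    - apply cont_const.
    - apply cont_opp, cont_mul; [apply cont_id | apply cont_const]. }
  assert (H0 : chord_defect x H 0 = 0) by (unfold chord_defect; rewrite !Rmult_0_l, Rplus_0_r; ring).
  assert (H1 : chord_defect x H 1 = 0) by (unfold chord_defect; rewrite !Rmult_1_l; ring).
  pose proof (mass_nonneg u x H). assert (HB : 0 <= K * mass u x H) by nra.
  apply Rabs_le. split.
  - assert (- chord_defect x H lam <= K * mass u x H); [|lra].
    apply (second_difference_max_principle (fun l => - chord_defect x H l));
      [apply cont_opp, Hc | rewrite H0; ring | rewrite H1; ring | exact HB | | exact Hlam].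
    intros l h Hh Hhl Hl1. pose proof (chord_defect_second_difference x H l h Hh Hhl Hl1) as D.
    apply Rabs_le_between in D. lra.
  - apply second_difference_max_principle; auto.
    intros l h Hh Hhl Hl1. pose proof (chord_defect_second_difference x H l h Hh Hhl Hl1) as D.
    apply Rabs_le_between in D. lra.
Qed.

Lemma zygmund_midpoint x H :
  Rabs (w (x + H) - 2 * w (x + H / 2) + w x) <= K * mass u x H.
Proof.
  pose proof (zygmund_second_difference (x + H / 2) (H / 2)) as Z.
  replace (x + H / 2 + H / 2) with (x + H) in Z by field.
  replace (x + H / 2 - H / 2) with x in Z by field. exact Z.
Qed.

Lemma zygmund_secant x L H : 0 < L -> Rabs H <= L ->
  Rabs (w (x + H) - w x - H / (2 * L) * (w (x + L) - w (x - L)))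
    <= 2 * K * (u (x + L) - u (x - L)).
Proof.
  intros HL HH. apply Rabs_le_between in HH.
  assert (Hl1 : 0 <= (H + L) / (2 * L) <= 1).
  { split; [apply Rdiv_le_0_compat; lra|]. apply Rmult_le_reg_r with (2 * L); [lra|].
    replace ((H + L) / (2 * L) * (2 * L)) with (H + L) by (field; lra). lra. }
  pose proof (zygmund_chord (x - L) (2 * L) _ Hl1) as C1.
  pose proof (zygmund_chord (x - L) (2 * L) (1 / 2) ltac:(lra)) as C2.
  replace (x - L + (H + L) / (2 * L) * (2 * L)) with (x + H) in C1 by (field; lra).
  replace (x - L + 1 / 2 * (2 * L)) with x in C2 by field.
  rewrite mass_right in C1, C2 by (auto; lra). replace (x - L + 2 * L) with (x + L) in * by ring.
  replace (w (x + H) - w x - H / (2 * L) * (w (x + L) - w (x - L))) with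
    ((w (x + H) - w (x - L) - (H + L) / (2 * L) * (w (x + L) - w (x - L))) -
     (w x - w (x - L) - 1 / 2 * (w (x + L) - w (x - L)))) by (field; lra).
  eapply Rle_trans; [apply Rabs_triang|]. rewrite Rabs_Ropp. lra.
Qed.

End Chords.

(** Error of the chord approximation of [v] at dyadic sub-scales:
    [e 0 = 1] and [e (n+1) = t e n + 2^-(n+1)]; it tends to 0 for [t < 1]. *)
Fixpoint dyadic_error (t : R) (n : nat) : R :=
  match n with
  | O => 1
  | S m => t * dyadic_error t m + (/ 2) ^ (S m)
  end.

Lemma dyadic_error_nonneg t n : 0 <= t -> 0 <= dyadic_error t n.
Proof.
  intros Ht. induction n; simpl; [lra|].
  pose proof (pow_le (/ 2) n). assert (0 <= / 2) by lra. nra.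
Qed.

Lemma dyadic_error_mono t t' n : 0 <= t <= t' -> dyadic_error t n <= dyadic_error t' n.
Proof.
  intros Ht. induction n; simpl; [lra|].
  pose proof (dyadic_error_nonneg t n (proj1 Ht)). nra.
Qed.

Variables (v : R -> R) (M : R).
Hypothesis Hz : zygmund_fn u v M.
Hypothesis Hv : continuity v.
Hypothesis HM : 0 <= M.

(** Chord approximation of [v] at scale [lambda H] with [lambda <= 2^-n]:
    halving the scale costs a factor [half_ratio] on the previous error plus
    one midpoint second difference. *)
Lemma zygmund_chord_dyadic n x H lam : 0 <= lam <= (/ 2) ^ n ->
  Rabs (v (x + lam * H) - v x - lam * (v (x + H) - v x))
    <= dyadic_error (half_ratio d) n * M * mass u x H.
Proof.
  pose proof (half_ratio_bounds d Hd0).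
  revert x H lam. induction n as [|n IHn]; intros x H lam Hl.
  - simpl in *. rewrite Rmult_1_l. apply zygmund_chord; auto.
  - assert (Hl' : 0 <= 2 * lam <= (/ 2) ^ n) by (simpl in Hl; lra).
    specialize (IHn x (H / 2) (2 * lam) Hl').
    replace (x + 2 * lam * (H / 2)) with (x + lam * H) in IHn by field.
    destruct (mass_half x H) as [Hh _].
    pose proof (zygmund_midpoint v M Hz HM x H) as Zm.
    pose proof (dyadic_error_nonneg (half_ratio d) n ltac:(lra)).
    pose proof (mass_nonneg u x H). pose proof (mass_nonneg u x (H / 2)).
    replace (v (x + lam * H) - v x - lam * (v (x + H) - v x)) with
      ((v (x + lam * H) - v x - 2 * lam * (v (x + H / 2) - v x))
       - lam * (v (x + H) - 2 * v (x + H / 2) + v x)) by ring.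
    eapply Rle_trans; [apply Rabs_triang|]. rewrite Rabs_Ropp, Rabs_mult.
    rewrite (Rabs_right lam) by lra.
    assert (lam * Rabs (v (x + H) - 2 * v (x + H / 2) + v x) <= (/ 2) ^ S n * (M * mass u x H)).
    { apply Rmult_le_compat; [lra | apply Rabs_pos | lra | exact Zm]. }
    assert (dyadic_error (half_ratio d) n * M * mass u x (H / 2)
            <= dyadic_error (half_ratio d) n * M * (half_ratio d * mass u x H)).
    { apply Rmult_le_compat_l; [apply Rmult_le_pos|]; auto. }
    simpl dyadic_error. simpl pow in *. nra.
Qed.

Lemma zygmund_reflect x H :
  Rabs ((v (x - H) - v x) + (v (x + H) - v x)) <= (2 + d) * M * mass u x H.
Proof.
  pose proof (zygmund_second_difference v M Hz HM x H) as Z.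
  assert (Hu2 : Rabs (u (x + H) - u (x - H)) <= mass u x H + mass u x (- H)).
  { unfold mass. replace (x + - H) with (x - H) by ring.
    replace (u (x + H) - u (x - H)) with ((u (x + H) - u x) + - (u (x - H) - u x)) by ring.
    rewrite <- (Rabs_Ropp (u (x - H) - u x)). apply Rabs_triang. }
  pose proof (mass_reflect x H).
  replace ((v (x - H) - v x) + (v (x + H) - v x)) with (v (x + H) - 2 * v x + v (x - H)) by ring.
  eapply Rle_trans; [exact Z|]. nra.
Qed.

(** Constant in the comparison of increments of [v] at scales [Ha] and
    [Hb] with [|Hb| <= 2^-n |Ha|]. *)
Definition ratio_error (n : nat) : R :=
  dyadic_error (half_ratio d) n + (2 + d) * half_ratio d ^ n.

Lemma ratio_error_nonneg n : 0 <= ratio_error n.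
Proof.
  pose proof (half_ratio_bounds d Hd0). unfold ratio_error.
  pose proof (dyadic_error_nonneg (half_ratio d) n ltac:(lra)).
  assert (0 <= half_ratio d ^ n) by (apply pow_le; lra). nra.
Qed.

Lemma zygmund_ratio x Ha Hb n : Ha <> 0 -> Rabs Hb <= (/ 2) ^ n * Rabs Ha ->
  Rabs (Rabs (v (x + Hb) - v x) - Rabs Hb / Rabs Ha * Rabs (v (x + Ha) - v x))
    <= ratio_error n * M * mass u x Ha.
Proof.
  intros HA Hl. pose proof (scale_upper Ha Hb _ HA Hl) as Hlam.
  set (lam := Rabs Hb / Rabs Ha) in *. set (Da := v (x + Ha) - v x).
  pose proof (half_ratio_bounds d Hd0).
  pose proof (zygmund_chord_dyadic n x Ha lam Hlam) as Hchord. fold Da in Hchord.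
  pose proof (mass_scaled x Ha lam n Hlam). pose proof (mass_nonneg u x Ha).
  pose proof (dyadic_error_nonneg (half_ratio d) n ltac:(lra)).
  assert (0 <= half_ratio d ^ n * mass u x Ha) by (apply Rmult_le_pos; [apply pow_le|]; lra).
  assert (0 <= (2 + d) * (half_ratio d ^ n * mass u x Ha) * M)
    by (apply Rmult_le_pos; [apply Rmult_le_pos|]; lra).
  assert (Hsign : exists sg, Rabs sg = 1 /\
            Rabs (v (x + Hb) - v x - sg * (lam * Da)) <= ratio_error n * M * mass u x Ha).
  { unfold ratio_error. destruct (scale_sign Ha Hb HA) as [E|E]; fold lam in E; rewrite E.
    - exists 1. rewrite Rabs_R1. split; [reflexivity|].
      rewrite Rmult_1_l. eapply Rle_trans; [exact Hchord|]. nra.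
    - exists (-1). split; [rewrite Rabs_left by lra; ring|].
      pose proof (zygmund_reflect x (lam * Ha)) as Hr.
      replace (x + - (lam * Ha)) with (x - lam * Ha) by ring.
      replace (v (x - lam * Ha) - v x - -1 * (lam * Da)) with
        (((v (x - lam * Ha) - v x) + (v (x + lam * Ha) - v x))
         - (v (x + lam * Ha) - v x - lam * Da)) by ring.
      assert ((2 + d) * M * mass u x (lam * Ha) <= (2 + d) * M * (half_ratio d ^ n * mass u x Ha))
        by (apply Rmult_le_compat_l; [apply Rmult_le_pos|]; lra).
      eapply Rle_trans; [apply Rabs_triang|]. rewrite Rabs_Ropp. nra. }
  destruct Hsign as [sg [Hsg Hk]].
  assert (Habs : Rabs (sg * (lam * Da)) = lam * Rabs Da).
  { rewrite !Rabs_mult, Hsg, (Rabs_right lam) by lra. ring. }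
  pose proof (Rabs_triang_inv2 (v (x + Hb) - v x) (sg * (lam * Da))) as T.
  rewrite Habs in T. lra.
Qed.

Definition far_constant (n : nat) : R :=
  (1 + d) * half_ratio d ^ n + ratio_error n * M + (/ 2) ^ n.

Lemma far_constant_pos n : 0 < far_constant n.
Proof.
  pose proof (half_ratio_bounds d Hd0). pose proof (ratio_error_nonneg n). unfold far_constant.
  assert (0 <= half_ratio d ^ n) by (apply pow_le; lra).
  assert (0 < (/ 2) ^ n) by (apply pow_lt; lra). nra.
Qed.

Lemma chord_far x Ha Hb n : Ha <> 0 -> Rabs Hb <= (/ 2) ^ n * Rabs Ha ->
  chord u v x Hb <= far_constant n * chord u v x Ha.
Proof.
  intros HA Hl. pose proof (mass_upper x Ha Hb n HA Hl).
  pose proof (Rabs_le_between _ _ (zygmund_ratio x Ha Hb n HA Hl)).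
  pose proof (scale_upper Ha Hb _ HA Hl).
  pose proof (chord_le_sum u v x Hb). pose proof (chord_ge_mass u v x Ha).
  pose proof (chord_ge_vertical u v x Ha). pose proof (Rabs_pos (v (x + Ha) - v x)).
  pose proof (mass_nonneg u x Ha).
  pose proof (half_ratio_bounds d Hd0). pose proof (ratio_error_nonneg n).
  assert (0 <= half_ratio d ^ n) by (apply pow_le; lra).
  assert ((1 + d) * half_ratio d ^ n * mass u x Ha <= (1 + d) * half_ratio d ^ n * chord u v x Ha)
    by (apply Rmult_le_compat_l; [apply Rmult_le_pos|]; lra).
  assert (ratio_error n * M * mass u x Ha <= ratio_error n * M * chord u v x Ha)
    by (apply Rmult_le_compat_l; [apply Rmult_le_pos|]; lra).
  assert (Rabs Hb / Rabs Ha * Rabs (v (x + Ha) - v x) <= (/ 2) ^ n * chord u v x Ha)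
    by (apply Rmult_le_compat; lra).
  unfold far_constant. lra.
Qed.

Definition near_constant (N : nat) : R :=
  far_constant 0 + (1 + d) * (2 + d) ^ N * (1 + 2 ^ N * ratio_error 0 * M) + 2 ^ N.

Lemma near_constant_pos N : 0 < near_constant N.
Proof.
  pose proof (far_constant_pos 0). pose proof (ratio_error_nonneg 0).
  assert (0 < 2 ^ N) by (apply pow_lt; lra). assert (0 < (2 + d) ^ N) by (apply pow_lt; lra).
  assert (0 <= 2 ^ N * ratio_error 0 * M) by (apply Rmult_le_pos; [apply Rmult_le_pos|]; lra).
  assert (0 <= (1 + d) * (2 + d) ^ N * (1 + 2 ^ N * ratio_error 0 * M))
    by (apply Rmult_le_pos; [apply Rmult_le_pos|]; lra).
  unfold near_constant. lra.
Qed.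

Lemma chord_near x Ha Hb N : Ha <> 0 -> Hb <> 0 -> (/ 2) ^ N * Rabs Hb <= Rabs Ha ->
  chord u v x Hb <= near_constant N * chord u v x Ha.
Proof.
  intros HA HB Hl.
  pose proof (chord_ge_mass u v x Ha). pose proof (mass_nonneg u x Ha).
  pose proof (ratio_error_nonneg 0). pose proof (far_constant_pos 0).
  assert (HA2 : 0 < 2 ^ N) by (apply pow_lt; lra).
  set (A := (1 + d) * (2 + d) ^ N).
  assert (HAd : 0 <= A) by (unfold A; assert (0 < (2 + d) ^ N) by (apply pow_lt; lra); nra).
  set (c := ratio_error 0 * M). assert (Hc0 : 0 <= c) by (apply Rmult_le_pos; lra).
  replace (near_constant N * chord u v x Ha)
    with (far_constant 0 * chord u v x Ha + A * chord u v x Ha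
          + 2 ^ N * ((1 + c * A) * chord u v x Ha)) by (unfold near_constant, A, c; ring).
  assert (0 <= far_constant 0 * chord u v x Ha) by nra.
  assert (0 <= A * chord u v x Ha) by nra.
  assert (0 <= 2 ^ N * ((1 + c * A) * chord u v x Ha)) by (apply Rmult_le_pos; nra).
  destruct (Rle_dec (Rabs Hb) (Rabs Ha)) as [Hc|Hc].
  - pose proof (chord_far x Ha Hb 0 HA ltac:(simpl; lra)). lra.
  -
    pose proof (mass_lower x Hb Ha N HB Hl) as Hm. fold A in Hm.
    pose proof (Rabs_le_between _ _ (zygmund_ratio x Hb Ha 0 HB ltac:(simpl; lra))) as Hr.
    pose proof (scale_lower Hb Ha _ HB Hl) as Hlam.
    set (lam := Rabs Ha / Rabs Hb) in *. set (Db := Rabs (v (x + Hb) - v x)) in *.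
    pose proof (chord_le_sum u v x Hb) as Hsum. fold Db in Hsum.
    pose proof (chord_ge_vertical u v x Ha).
    assert (HDb : 0 <= Db) by apply Rabs_pos.
    assert (Hpow : 2 ^ N * (/ 2) ^ N = 1) by (rewrite <- Rpow_mult_distr, Rinv_r, pow1; lra).
    assert (Db <= 2 ^ N * (lam * Db)).
    { replace Db with (2 ^ N * ((/ 2) ^ N * Db)) at 1 by (rewrite <- Rmult_assoc, Hpow; ring).
      apply Rmult_le_compat_l; [lra|]. apply Rmult_le_compat_r; lra. }
    assert (c * mass u x Hb <= c * (A * chord u v x Ha)) by (apply Rmult_le_compat_l; nra).
    assert (lam * Db <= (1 + c * A) * chord u v x Ha) by (fold c in Hr; nra).
    assert (2 ^ N * (lam * Db) <= 2 ^ N * ((1 + c * A) * chord u v x Ha))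
      by (apply Rmult_le_compat_l; lra).
    assert (A * mass u x Ha <= A * chord u v x Ha) by (apply Rmult_le_compat_l; lra).
    lra.
Qed.

Lemma chord_pos x H : H <> 0 -> 0 < chord u v x H.
Proof. intros HH. pose proof (mass_pos x H HH). pose proof (chord_ge_mass u v x H). lra. Qed.

Lemma mass_ratio_far x Ha Hb n : Hb <> 0 -> Rabs Ha <= (/ 2) ^ n * Rabs Hb ->
  mass u x Ha / mass u x Hb <= (1 + d) * half_ratio d ^ n.
Proof. intros HB Hl. apply Rdiv_le_of_le_mul; [apply mass_pos, HB | apply mass_upper; assumption]. Qed.

Lemma mass_ratio_near x Ha Hb n : Ha <> 0 -> Hb <> 0 -> (/ 2) ^ n * Rabs Ha <= Rabs Hb ->
  mass u x Ha / mass u x Hb <= (1 + d) * (2 + d) ^ n.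
Proof.
  intros HA HB Hl. apply Rdiv_le_of_le_mul; [apply mass_pos, HB | apply mass_lower; assumption].
Qed.

Lemma chord_ratio_far x Ha Hb n : Ha <> 0 -> Hb <> 0 -> Rabs Hb <= (/ 2) ^ n * Rabs Ha ->
  1 / far_constant n <= chord u v x Ha / chord u v x Hb.
Proof. intros HA HB Hl. apply ratio_ge_inv; [apply chord_pos.. | apply chord_far]; assumption. Qed.

Lemma chord_ratio_near x Ha Hb N : Ha <> 0 -> Hb <> 0 -> (/ 2) ^ N * Rabs Hb <= Rabs Ha ->
  1 / near_constant N <= chord u v x Ha / chord u v x Hb.
Proof. intros HA HB Hl. apply ratio_ge_inv; [apply chord_pos.. | apply chord_near]; assumption. Qed.

Lemma far_constant_small e : 0 < e -> exists N, far_constant N < e.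
Proof.
  intros He. pose proof (half_ratio_bounds d Hd0) as Hth.
  set (C := (1 + d) + (2 + d) * M).
  assert (HC : 0 < C) by (unfold C; nra).
  destruct (eventually_and _ _
     (pow_eventually_small (half_ratio d) ltac:(lra) (e / 3 / C) ltac:(apply Rdiv_lt_0_compat; lra))
     (eventually_and _ _
        (contracting_sequence_small (dyadic_error (half_ratio d)) (half_ratio d) ltac:(lra)
           (fun n => dyadic_error_nonneg (half_ratio d) n ltac:(lra)) (fun n => Rle_refl _)
           (e / 3 / (M + 1)) ltac:(apply Rdiv_lt_0_compat; lra))
        (pow_eventually_small (/ 2) ltac:(lra) (e / 3) ltac:(lra)))) as [N HN].
  destruct (HN N (le_n N)) as [T1 [T2 T3]]. exists N.
  pose proof (dyadic_error_nonneg (half_ratio d) N ltac:(lra)).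
  assert (half_ratio d ^ N * C < e / 3).
  { apply Rmult_lt_reg_r with (/ C); [apply Rinv_0_lt_compat; lra|].
    rewrite Rmult_assoc, Rinv_r, Rmult_1_r by lra. exact T1. }
  assert (dyadic_error (half_ratio d) N * (M + 1) < e / 3).
  { apply Rmult_lt_reg_r with (/ (M + 1)); [apply Rinv_0_lt_compat; lra|].
    rewrite Rmult_assoc, Rinv_r, Rmult_1_r by lra. exact T2. }
  unfold far_constant, ratio_error, C in *. nra.
Qed.

Lemma ratio_pairs_range R0 r : ratio_pairs u v R0 r -> 0 <= R0 /\ 0 < r.
Proof.
  intros [x [Ha [Hb [HA [HB [-> ->]]]]]].
  pose proof (mass_pos x Ha HA). pose proof (mass_pos x Hb HB).
  pose proof (chord_pos x Ha HA). pose proof (chord_pos x Hb HB).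
  split; [left|]; apply Rdiv_lt_0_compat; auto.
Qed.

(** Bounded chord ratios force bounded mass ratios: a much shorter second
    increment would give a large chord ratio. *)
Lemma ratio_pairs_bounded T :
  exists K, forall R0 r, ratio_pairs u v R0 r -> r <= T -> R0 <= K.
Proof.
  destruct (Rle_dec T 0) as [HT|HT].
  { exists 0. intros R0 r HS Hr. pose proof (ratio_pairs_range R0 r HS). lra. }
  destruct (far_constant_small (/ T)) as [N HN]; [apply Rinv_0_lt_compat; lra|].
  exists ((1 + d) * (2 + d) ^ N). intros R0 r [x [Ha [Hb [HA [HB [-> ->]]]]]] Hr.
  destruct (Rle_dec (Rabs Hb) ((/ 2) ^ N * Rabs Ha)) as [Hc|Hc].
  - exfalso. pose proof (chord_ratio_far x Ha Hb N HA HB Hc).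
    pose proof (lt_inv_swap _ T (far_constant_pos N) ltac:(lra) HN). lra.
  - apply mass_ratio_near; [exact HA | exact HB | lra].
Qed.

(** Small chord ratios force small mass ratios: unless the first increment is
    much shorter, the chord ratio stays away from 0. *)
Lemma ratio_pairs_small e : 0 < e ->
  exists tau, 0 < tau /\ forall R0 r, ratio_pairs u v R0 r -> r <= tau -> R0 <= e.
Proof.
  intros He. pose proof (half_ratio_bounds d Hd0).
  destruct (pow_times_small (half_ratio d) (1 + d) e ltac:(lra) ltac:(lra) He) as [N HN].
  pose proof (near_constant_pos N) as HC.
  exists (1 / (2 * near_constant N)). split; [apply Rdiv_lt_0_compat; lra|].
  intros R0 r [x [Ha [Hb [HA [HB [-> ->]]]]]] Hr.
  destruct (Rle_dec (Rabs Ha) ((/ 2) ^ N * Rabs Hb)) as [Hc|Hc].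
  - pose proof (mass_ratio_far x Ha Hb N HB Hc). lra.
  - exfalso. pose proof (chord_ratio_near x Ha Hb N HA HB ltac:(lra)).
    assert (1 / (2 * near_constant N) < 1 / near_constant N); [|lra].
    apply Rmult_lt_reg_r with (2 * near_constant N); [lra|].
    replace (1 / (2 * near_constant N) * (2 * near_constant N)) with 1 by (field; lra).
    replace (1 / near_constant N * (2 * near_constant N)) with 2 by (field; lra). lra.
Qed.

Lemma ratio_pairs_controlled : controlled (ratio_pairs u v).
Proof.
  split; [exact ratio_pairs_range|]. split; [exact ratio_pairs_small | exact ratio_pairs_bounded].
Qed.

Lemma doubling_zygmund : zygmund_fn u u d.
Proof.
  intros x h Hh. destruct (Hd x h Hh) as [D1 D2].
  pose proof (Hu x (x + h) ltac:(lra)). pose proof (Hu (x - h) x ltac:(lra)).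
  apply Rabs_le. split; nra.
Qed.

Definition secant_slope (w : R -> R) (x L : R) : R := (w (x + L) - w (x - L)) / (2 * L).

Lemma secant_slope_nonneg x L : 0 < L -> 0 <= secant_slope u x L.
Proof.
  intros HL. unfold secant_slope. apply Rdiv_le_0_compat; [|lra].
  pose proof (increasing_le (x - L) (x + L) ltac:(lra)). lra.
Qed.

Lemma secant_increment w K x L H N : zygmund_fn u w K -> 0 <= K -> continuity w ->
  0 < L -> Rabs H <= L -> L <= 2 ^ N * Rabs H ->
  Rabs (w (x + H) - w x - secant_slope w x L * H)
    <= 2 ^ (N + 2) * K * (secant_slope u x L * Rabs H).
Proof.
  intros Hzw HK Hw HL HH HN.
  pose proof (zygmund_secant w K Hzw HK Hw x L H HL HH) as Hs.
  replace (H / (2 * L) * (w (x + L) - w (x - L))) with (secant_slope w x L * H) in Hs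
    by (unfold secant_slope; field; lra).
  replace (u (x + L) - u (x - L)) with (2 * L * secant_slope u x L) in Hs
    by (unfold secant_slope; field; lra).
  pose proof (secant_slope_nonneg x L HL).
  eapply Rle_trans; [exact Hs|].
  replace (2 * K * (2 * L * secant_slope u x L)) with (4 * K * secant_slope u x L * L) by ring.
  replace (2 ^ (N + 2) * K * (secant_slope u x L * Rabs H))
    with (4 * K * secant_slope u x L * (2 ^ N * Rabs H)) by (rewrite pow_add; simpl; ring).
  apply Rmult_le_compat_l; [|exact HN]. apply Rmult_le_pos; lra.
Qed.

Lemma chord_near_linear x L H N : 0 < L -> Rabs H <= L -> L <= 2 ^ N * Rabs H ->
  let k := secant_slope u x L in
  let s := sqrt (k ^ 2 + secant_slope v x L ^ 2) in
  let E := 2 ^ (N + 2) * (d + M) in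
  k * Rabs H * (1 - E) <= mass u x H <= k * Rabs H * (1 + E) /\
  s * Rabs H * (1 - E) <= chord u v x H <= s * Rabs H * (1 + E).
Proof.
  intros HL HH HN k s E.
  pose proof (secant_increment u d x L H N doubling_zygmund ltac:(lra)
                doubling_continuous HL HH HN) as Cu.
  pose proof (secant_increment v M x L H N Hz HM Hv HL HH HN) as Cv.
  fold k in Cu, Cv. set (b := secant_slope v x L) in *.
  set (e1 := u (x + H) - u x - k * H) in *. set (e2 := v (x + H) - v x - b * H) in *.
  pose proof (secant_slope_nonneg x L HL) as Hk. fold k in Hk.
  assert (HaH : 0 <= Rabs H) by apply Rabs_pos.
  assert (Hp : 0 < 2 ^ (N + 2)) by (apply pow_lt; lra).
  assert (HE : Rabs e1 + Rabs e2 <= E * (k * Rabs H)).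
  { unfold E. assert (0 <= k * Rabs H) by nra. nra. }
  assert (Hks : k <= s).
  { unfold s. rewrite <- (sqrt_pow2 k) at 1 by lra. apply sqrt_le_1_alt.
    pose proof (pow2_ge_0 b). lra. }
  assert (HEk : E * (k * Rabs H) <= E * (s * Rabs H)).
  { apply Rmult_le_compat_l; [unfold E; nra|]. apply Rmult_le_compat_r; lra. }
  assert (HkH : Rabs (k * H) = k * Rabs H) by (rewrite Rabs_mult, Rabs_right; lra).
  assert (Hmass : mass u x H = Rabs (k * H + e1)) by (unfold mass, e1; f_equal; ring).
  assert (Hchord : chord u v x H = sqrt ((k * H + e1) ^ 2 + (b * H + e2) ^ 2))
    by (unfold chord; f_equal; unfold e1, e2; ring).
  pose proof (euclid_perturb (k * H) (b * H) e1 e2) as N1.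
  pose proof (euclid_perturb_rev (k * H) (b * H) e1 e2) as N2.
  rewrite euclid_scale, <- Hchord in N1, N2. fold s in N1, N2.
  pose proof (Rabs_triang (k * H) e1) as T1.
  pose proof (Rabs_triang (k * H + e1) (- e1)) as T2. rewrite Rabs_Ropp in T2.
  replace (k * H + e1 + - e1) with (k * H) in T2 by ring.
  pose proof (Rabs_pos e1). pose proof (Rabs_pos e2).
  rewrite Hmass. split; split; nra.
Qed.

Lemma flat_polynomial E : 0 <= E <= 1 / 2 -> (1 + E) ^ 2 <= (1 + 16 * E) * (1 - E) ^ 2.
Proof.
  intros HE. assert (0 <= E * (1 - 2 * E) * (3 - 2 * E)) by (apply Rmult_le_pos; nra).
  replace ((1 + 16 * E) * (1 - E) ^ 2) with ((1 + E) ^ 2 + 4 * (E * (1 - 2 * E) * (3 - 2 * E))) by ring.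
  lra.
Qed.

(** On comparable scales, mass ratios and chord ratios agree up to the factor
    [1 + 16 E]: both are nearly [|Ha| / |Hb|] (product form). *)
Lemma flat_product x Ha Hb N : Ha <> 0 -> Hb <> 0 ->
  (/ 2) ^ N * Rabs Hb <= Rabs Ha -> (/ 2) ^ N * Rabs Ha <= Rabs Hb ->
  2 ^ (N + 2) * (d + M) <= 1 / 2 ->
  mass u x Ha * chord u v x Hb
    <= (1 + 16 * (2 ^ (N + 2) * (d + M))) * (chord u v x Ha * mass u x Hb).
Proof.
  intros HA HB H1 H2 HE.
  (* compare both increments with the secant over [[x - L, x + L]] *)
  set (L := Rmax (Rabs Ha) (Rabs Hb)).
  pose proof (Rabs_pos_lt Ha HA). pose proof (Rabs_pos_lt Hb HB).
  pose proof (max_le_pow_scale _ _ N H H1) as HLa. fold L in HLa.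
  pose proof (max_le_pow_scale _ _ N H0 H2) as HLb. rewrite Rmax_comm in HLb. fold L in HLb.
  assert (HL : 0 < L) by (eapply Rlt_le_trans; [exact H | apply Rmax_l]).
  destruct (chord_near_linear x L Ha N HL (Rmax_l _ _) HLa) as [[A1 A2] [P1 P2]].
  destruct (chord_near_linear x L Hb N HL (Rmax_r _ _) HLb) as [[B1 B2] [Q1 Q2]].
  set (k := secant_slope u x L) in *. set (s := sqrt (k ^ 2 + secant_slope v x L ^ 2)) in *.
  set (E := 2 ^ (N + 2) * (d + M)) in *.
  assert (HE0 : 0 <= E) by (unfold E; assert (0 < 2 ^ (N + 2)) by (apply pow_lt; lra); nra).
  pose proof (secant_slope_nonneg x L HL) as Hk. fold k in Hk.
  assert (Hs : 0 <= s) by (unfold s; apply sqrt_pos).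
  set (X := k * s * Rabs Ha * Rabs Hb).
  assert (HX : 0 <= X)
    by (unfold X; apply Rmult_le_pos; [apply Rmult_le_pos; [apply Rmult_le_pos|]|]; lra).
  assert (T1 : mass u x Ha * chord u v x Hb <= X * (1 + E) ^ 2).
  { pose proof (mass_nonneg u x Ha). pose proof (chord_ge_mass u v x Hb).
    pose proof (mass_nonneg u x Hb).
    apply Rle_trans with ((k * Rabs Ha * (1 + E)) * (s * Rabs Hb * (1 + E))).
    - apply Rmult_le_compat; lra.
    - right. unfold X. ring. }
  assert (T2 : X * (1 - E) ^ 2 <= chord u v x Ha * mass u x Hb).
  { apply Rle_trans with ((s * Rabs Ha * (1 - E)) * (k * Rabs Hb * (1 - E))).
    - right. unfold X. ring.
    - apply Rmult_le_compat; [nra | nra | lra | lra]. }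
  pose proof (flat_polynomial E ltac:(lra)).
  assert (X * (1 + E) ^ 2 <= X * ((1 + 16 * E) * (1 - E) ^ 2)) by (apply Rmult_le_compat_l; lra).
  assert ((1 + 16 * E) * (X * (1 - E) ^ 2) <= (1 + 16 * E) * (chord u v x Ha * mass u x Hb))
    by (apply Rmult_le_compat_l; lra).
  nra.
Qed.

Lemma flat_ratio x Ha Hb N : Ha <> 0 -> Hb <> 0 ->
  (/ 2) ^ N * Rabs Hb <= Rabs Ha -> (/ 2) ^ N * Rabs Ha <= Rabs Hb ->
  2 ^ (N + 2) * (d + M) <= 1 / 2 ->
  mass u x Ha / mass u x Hb
    <= (1 + 16 * (2 ^ (N + 2) * (d + M))) * (chord u v x Ha / chord u v x Hb).
Proof.
  intros HA HB H1 H2 HE. pose proof (flat_product x Ha Hb N HA HB H1 H2 HE) as F.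
  pose proof (mass_pos x Hb HB). pose proof (chord_pos x Hb HB).
  apply Rdiv_le_of_le_mul; [assumption|].
  apply Rmult_le_reg_r with (chord u v x Hb); [assumption|].
  replace ((1 + 16 * (2 ^ (N + 2) * (d + M))) * (chord u v x Ha / chord u v x Hb) * mass u x Hb
           * chord u v x Hb)
    with ((1 + 16 * (2 ^ (N + 2) * (d + M))) * (chord u v x Ha * mass u x Hb)) by (field; lra).
  lra.
Qed.

Lemma far_constant_uniform N : d <= 1 -> M <= 1 ->
  far_constant N <= 5 * (2 / 3) ^ N + dyadic_error (2 / 3) N + (/ 2) ^ N.
Proof.
  intros Hd1 HM1. pose proof (half_ratio_bounds d Hd0). pose proof (half_ratio_le d Hd0 Hd1).
  assert (Hthn : half_ratio d ^ N <= (2 / 3) ^ N) by (apply pow_incr; lra).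
  assert (0 <= half_ratio d ^ N) by (apply pow_le; lra).
  assert (dyadic_error (half_ratio d) N <= dyadic_error (2 / 3) N) by (apply dyadic_error_mono; lra).
  pose proof (dyadic_error_nonneg (half_ratio d) N ltac:(lra)).
  assert (0 <= ratio_error N) by apply ratio_error_nonneg.
  assert (ratio_error N * M <= ratio_error N) by nra.
  unfold far_constant. unfold ratio_error in *. nra.
Qed.

Lemma ratio_pairs_near_identity s N : 0 < s ->
  5 * (2 / 3) ^ N + dyadic_error (2 / 3) N + (/ 2) ^ N < s / 2 ->
  2 ^ (N + 2) * (d + M) <= Rmin (1 / 2) (s * s / 64) ->
  forall R0 r, ratio_pairs u v R0 r -> r <= 2 / s -> R0 <= r + s / 2.
Proof.
  intros Hs HN HE R0 r [x [Ha [Hb [HA [HB [-> ->]]]]]] Hr.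
  set (E := 2 ^ (N + 2) * (d + M)) in *.
  pose proof (Rmin_l (1 / 2) (s * s / 64)). pose proof (Rmin_r (1 / 2) (s * s / 64)).
  assert (Hp : 1 <= 2 ^ (N + 2)) by (apply pow_R1_Rle; lra).
  assert (HdM : d + M <= 1 / 2) by (unfold E in *; nra).
  assert (HE0 : 0 <= E) by (unfold E; nra).
  assert (Hr0 : 0 < chord u v x Ha / chord u v x Hb)
    by (apply Rdiv_lt_0_compat; apply chord_pos; assumption).
  pose proof (dyadic_error_nonneg (2 / 3) N ltac:(lra)).
  assert (0 < (/ 2) ^ N) by (apply pow_lt; lra).
  assert (0 <= (2 / 3) ^ N) by (apply pow_le; lra).
  destruct (Rle_dec (Rabs Ha) ((/ 2) ^ N * Rabs Hb)) as [C1|C1].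
  - (* [Ha] much shorter: the mass ratio itself is below [s/2] *)
    pose proof (mass_ratio_far x Ha Hb N HB C1). pose proof (half_ratio_bounds d Hd0).
    pose proof (half_ratio_le d Hd0 ltac:(lra)).
    assert (half_ratio d ^ N <= (2 / 3) ^ N) by (apply pow_incr; lra). nra.
  - destruct (Rle_dec (Rabs Hb) ((/ 2) ^ N * Rabs Ha)) as [C2|C2].
    + (* [Hb] much shorter: the chord ratio would exceed [2/s] *)
      exfalso. pose proof (chord_ratio_far x Ha Hb N HA HB C2).
      pose proof (far_constant_uniform N ltac:(lra) ltac:(lra)).
      assert (Hf : far_constant N < / (2 / s)) by (rewrite Rinv_div; lra).
      assert (0 < 2 / s) by (apply Rdiv_lt_0_compat; lra).
      pose proof (lt_inv_swap _ (2 / s) (far_constant_pos N) ltac:(assumption) Hf). lra.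
    + (* comparable scales: the graph is flat there *)
      pose proof (flat_ratio x Ha Hb N HA HB ltac:(lra) ltac:(lra) ltac:(unfold E in *; lra)) as Hflat.
      assert (16 * E * (chord u v x Ha / chord u v x Hb) <= s / 2).
      { apply Rle_trans with (16 * (s * s / 64) * (2 / s)).
        - apply Rmult_le_compat; lra.
        - right. field. lra. }
      fold E in Hflat. nra.
Qed.

End GraphGeometry.

(** * The distribution function of a doubling measure *)

Lemma borel_ext (A B : R -> Prop) : (forall x, A x <-> B x) -> borel A -> borel B.
Proof.
  intros H HA. replace B with A; [exact HA|].
  apply functional_extensionality. intros x. apply propositional_extensionality. auto.
Qed.

Lemma open_abs_lt c : open_set (fun x => Rabs x < c).
Proof.
  intros x Hx. assert (Hp : 0 < c - Rabs x) by lra.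
  exists (mkposreal _ Hp). intros y Hy. unfold disc in Hy. simpl in Hy.
  pose proof (Rabs_triang (y - x) x). replace (y - x + x) with y in H by ring. lra.
Qed.

Lemma open_outside a b : open_set (fun x => x < a \/ b < x).
Proof.
  intros x [Hx|Hx].
  - assert (Hp : 0 < a - x) by lra. exists (mkposreal _ Hp).
    intros y Hy. unfold disc in Hy. simpl in Hy. apply Rabs_def2 in Hy. left; lra.
  - assert (Hp : 0 < x - b) by lra. exists (mkposreal _ Hp).
    intros y Hy. unfold disc in Hy. simpl in Hy. apply Rabs_def2 in Hy. right; lra.
Qed.

Lemma borel_Icc a b : borel (Icc a b).
Proof.
  apply borel_ext with (fun x => ~ (x < a \/ b < x)).
  - intros x. unfold Icc. split; intros H; [split; apply Rnot_lt_le; tauto | lra].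
  - apply borel_compl, borel_open, open_outside.
Qed.

Lemma borel_empty : borel (fun _ => False).
Proof.
  apply borel_ext with (fun x => ~ True); [tauto|].
  apply borel_compl, borel_open. intros x _. exists (mkposreal 1 ltac:(lra)). intros y _. exact I.
Qed.

Lemma borel_inter A B : borel A -> borel B -> borel (fun x => A x /\ B x).
Proof.
  intros HA HB.
  set (C := fun k : nat => match k with O => fun y => ~ A y | _ => fun y => ~ B y end).
  apply borel_ext with (fun x => ~ exists n, C n x).
  - intros x. split.
    + intros H. split; apply NNPP; intros Hn; apply H; [exists O | exists 1%nat]; auto.
    + intros [H1 H2] [[|n] Hn]; auto.
  - apply borel_compl, borel_union. intros [|n]; apply borel_compl; auto.
Qed.

Lemma borel_diff A B : borel A -> borel B -> borel (fun x => A x /\ ~ B x).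
Proof. intros HA HB. apply borel_inter; [exact HA | apply borel_compl, HB]. Qed.

Lemma epartial_zero f : (forall n, f n = EFin 0) -> forall n, epartial f n = EFin 0.
Proof. intros H n. induction n; simpl; rewrite ?IHn, ?H; simpl; auto. f_equal. ring. Qed.

Lemma measure_subset_null mu A B : borel_measure mu -> borel A -> borel B ->
  (forall x, A x -> B x) -> mu B = EFin 0 -> mu A = EFin 0.
Proof.
  intros [Mext [M0 [Mnn Madd]]] HA HB Hsub HmB.
  (* B is the disjoint union of A, B \ A and empty sets *)
  set (F := fun k : nat => match k with O => A | 1%nat => (fun x => B x /\ ~ A x)
                                       | _ => (fun _ => False) end).
  assert (HF : forall n, borel (F n)).
  { intros [|[|n]]; simpl; [exact HA | apply borel_diff; auto | apply borel_empty]. }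
  assert (Hdisj : forall n m x, n <> m -> F n x -> F m x -> False).
  { intros [|[|n]] [|[|m]] x Hnm; simpl; tauto. }
  destruct (Madd F HF Hdisj) as [Hs _].
  assert (Hu : mu (fun x => exists n, F n x) = mu B).
  { apply Mext. intros x. split.
    - intros [[|[|n]] Hn]; simpl in Hn; [apply Hsub, Hn | tauto | tauto].
    - intros Hb. destruct (classic (A x)); [exists O | exists 1%nat]; simpl; auto. }
  rewrite Hu, HmB in Hs. specialize (Hs 1%nat). simpl in Hs.
  destruct (mu A) as [a|] eqn:Ea; [|contradiction].
  destruct (mu (fun x => B x /\ ~ A x)) as [c|] eqn:Ec; [|contradiction].
  simpl in Hs. assert (0 <= a) by (apply (Mnn A); auto).
  assert (0 <= c) by (apply (Mnn (fun x => B x /\ ~ A x)); [apply borel_diff | ]; auto).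
  f_equal. lra.
Qed.

Lemma measure_null_of_intervals mu : borel_measure mu ->
  (forall n : nat, mu (Icc (- INR (S n)) (INR (S n))) = EFin 0) ->
  forall A, borel A -> mu A = EFin 0.
Proof.
  intros Hm HI A HA. pose proof Hm as [Mext [M0 [Mnn Madd]]].
  (* A is the disjoint union of its traces on the shells [n <= |x| < n + 1] *)
  set (D := fun n : nat => fun x => A x /\ (Rabs x < INR (S n) /\ ~ (Rabs x < INR n))).
  assert (HD : forall n, borel (D n)).
  { intros n. apply borel_inter; [exact HA|].
    apply borel_diff; apply borel_open, open_abs_lt. }
  assert (Hdisj : forall n m x, n <> m -> D n x -> D m x -> False).
  { intros n m x Hnm [_ [H1 H2]] [_ [H3 H4]].
    destruct (Nat.lt_total n m) as [Hl|[He|Hl]]; [|tauto|].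
    - apply H4. apply Rlt_le_trans with (INR (S n)); auto. apply le_INR. lia.
    - apply H2. apply Rlt_le_trans with (INR (S m)); auto. apply le_INR. lia. }
  destruct (Madd D HD Hdisj) as [_ Hs].
  assert (Hz : forall n, mu (D n) = EFin 0).
  { intros n. apply (measure_subset_null mu (D n) (Icc (- INR (S n)) (INR (S n)))); auto.
    - apply borel_Icc.
    - intros x [_ [H1 _]]. apply Rabs_def2 in H1. unfold Icc. lra. }
  assert (Hu : mu (fun x => exists n, D n x) = mu A).
  { apply Mext. intros x. split; [intros [n [Hn _]]; exact Hn|].
    intros Hx. destruct (INR_archimed 1 (Rabs x)) as [N HN]; [lra|]. rewrite Rmult_1_r in HN.
    assert (Hk : forall k, Rabs x < INR k -> exists n, D n x).
    { induction k; intros Hk.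
      - simpl in Hk. pose proof (Rabs_pos x). lra.
      - destruct (Rlt_dec (Rabs x) (INR k)) as [Hl|Hl]; [auto|]. exists k. unfold D. auto. }
    apply (Hk N). lra. }
  rewrite Hu in Hs. specialize (Hs (EFin 0)).
  assert (Hle : ele (mu A) (EFin 0)).
  { apply Hs. intros n. rewrite (epartial_zero _ Hz). simpl. lra. }
  destruct (mu A) as [a|] eqn:Ea; [|contradiction].
  simpl in Hle. assert (0 <= a) by (apply (Mnn A); auto). f_equal. lra.
Qed.

(** A nondecreasing doubling function which is constant on some nontrivial
    interval is constant: reflecting the interval doubles it on both sides. *)
Lemma doubling_flat_constant u d : (forall a b, a <= b -> u a <= u b) -> doubling_fn u d ->
  forall a b, a < b -> u a = u b -> forall p, u p = u a.
Proof.
  intros Hm Hd a b Hab Heq.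
  set (l := b - a). assert (Hl : 0 < l) by (unfold l; lra).
  assert (Hstep : forall p q, p < q -> u p = u q -> u (2 * p - q) = u (2 * q - p)).
  { intros p q Hpq Hpq'. destruct (Hd q (q - p) ltac:(lra)) as [_ D2].
    destruct (Hd p (q - p) ltac:(lra)) as [D1 _].
    replace (q - (q - p)) with p in D2 by ring. replace (q + (q - p)) with (2 * q - p) in D2 by ring.
    replace (p - (q - p)) with (2 * p - q) in D1 by ring. replace (p + (q - p)) with q in D1 by ring.
    pose proof (Hm q (2 * q - p) ltac:(lra)). pose proof (Hm (2 * p - q) p ltac:(lra)). nra. }
  (* hence [u] is constant on [[a - n l, b + n l]] for every [n] *)
  assert (Hn : forall n : nat, u (a - INR n * l) = u (b + INR n * l)).
  { induction n.
    - simpl. rewrite !Rmult_0_l, Rminus_0_r, Rplus_0_r. exact Heq.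
    - assert (0 <= INR n) by apply pos_INR.
      pose proof (Hstep (a - INR n * l) (b + INR n * l) ltac:(nra) IHn).
      rewrite S_INR.
      pose proof (Hm (2 * (a - INR n * l) - (b + INR n * l)) (a - (INR n + 1) * l) ltac:(unfold l in *; nra)).
      pose proof (Hm (a - (INR n + 1) * l) (b + (INR n + 1) * l) ltac:(nra)).
      pose proof (Hm (b + (INR n + 1) * l) (2 * (b + INR n * l) - (a - INR n * l)) ltac:(unfold l in *; nra)).
      lra. }
  intros p.
  destruct (INR_archimed l (Rabs p + Rabs a + Rabs b)) as [n Hn']; [exact Hl|].
  pose proof (Hn n). pose proof (Rle_abs p). pose proof (Rle_abs (- p)). rewrite Rabs_Ropp in H1.
  pose proof (Rle_abs a). pose proof (Rle_abs (- a)). rewrite Rabs_Ropp in H3.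
  pose proof (Rle_abs b). pose proof (Rle_abs (- b)). rewrite Rabs_Ropp in H5.
  pose proof (Hm (a - INR n * l) p ltac:(lra)). pose proof (Hm p (b + INR n * l) ltac:(lra)).
  pose proof (Hm (a - INR n * l) a ltac:(nra)). pose proof (Hm a (b + INR n * l) ltac:(nra)).
  lra.
Qed.

Lemma distribution_properties mu delta u :
  radon_measure mu -> nonzero_measure mu -> doubling mu delta ->
  (forall a b, a < b -> mu (Icc a b) = EFin (u b - u a)) ->
  strictly_increasing u /\ doubling_fn u delta.
Proof.
  intros [Hm _] [A [HA HA0]] Hdb Hr.
  assert (Hd : doubling_fn u delta) by (intros x h Hh; apply (Hdb x h); auto; apply Hr; lra).
  split; [|exact Hd].
  assert (Hmono : forall a b, a <= b -> u a <= u b).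
  { intros a b [Hab | ->]; [|lra]. destruct Hm as [_ [_ [Mnn _]]].
    assert (0 <= u b - u a) by (apply (Mnn (Icc a b)); [apply borel_Icc | apply Hr; auto]). lra. }
  intros x y Hxy. destruct (Rlt_dec (u x) (u y)) as [H|H]; [exact H|]. exfalso.
  assert (Heq : u x = u y) by (pose proof (Hmono x y ltac:(lra)); lra).
  pose proof (doubling_flat_constant u delta Hmono Hd x y Hxy Heq) as Hc.
  apply HA0. apply (measure_null_of_intervals mu Hm); [|exact HA].
  intros n. rewrite Hr by (pose proof (pos_INR n); rewrite S_INR; lra).
  rewrite (Hc (INR (S n))), (Hc (- INR (S n))). f_equal. ring.
Qed.

Lemma distribution_zygmund mu u v M : zygmund_bound mu v M ->
  (forall a b, a < b -> mu (Icc a b) = EFin (u b - u a)) -> zygmund_fn u v M.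
Proof. intros Hz Hr x h Hh. apply Hz; [lra | apply Hr; lra]. Qed.

(** * Quasisymmetry of the graph *)

Lemma near_identity_scale s : 0 < s ->
  exists N, 5 * (2 / 3) ^ N + dyadic_error (2 / 3) N + (/ 2) ^ N < s / 2.
Proof.
  intros Hs.
  destruct (eventually_and _ _ (pow_eventually_small (2 / 3) ltac:(lra) (s / 20) ltac:(lra))
     (eventually_and _ _
        (contracting_sequence_small (dyadic_error (2 / 3)) (2 / 3) ltac:(lra)
           (fun n => dyadic_error_nonneg (2 / 3) n ltac:(lra)) (fun n => Rle_refl _) (s / 8) ltac:(lra))
        (pow_eventually_small (/ 2) ltac:(lra) (s / 8) ltac:(lra)))) as [N HN].
  destruct (HN N (le_n N)) as [T1 [T2 T3]]. exists N. lra.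
Qed.

Lemma near_identity_threshold s : 0 < s -> exists eps, 0 < eps /\
  forall u v d M, strictly_increasing u -> doubling_fn u d -> 0 < d ->
    zygmund_fn u v M -> continuity v -> 0 <= M -> d <= eps -> M <= 2 * eps ->
    forall R0 r, ratio_pairs u v R0 r -> r <= 2 / s -> R0 <= r + s / 2.
Proof.
  intros Hs. destruct (near_identity_scale s Hs) as [N HN].
  set (m := Rmin (1 / 2) (s * s / 64)).
  assert (Hm : 0 < m) by (unfold m; apply Rmin_glb_lt; nra).
  assert (Hp : 0 < 2 ^ (N + 2)) by (apply pow_lt; lra).
  exists (m / (3 * 2 ^ (N + 2))). split; [apply Rdiv_lt_0_compat; lra|].
  intros u v d M Hu Hd Hd0 Hz Hv HM Hde HMe.
  apply (ratio_pairs_near_identity u d Hu Hd Hd0 v M Hz Hv HM s N Hs HN).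
  fold m. replace m with (2 ^ (N + 2) * (3 * (m / (3 * 2 ^ (N + 2))))) by (field; lra).
  apply Rmult_le_compat_l; lra.
Qed.

(** The projection to the real part is a homeomorphism of the graph onto R:
    its inverse [y |-> (y, v (u^-1 y))] is continuous. *)
Lemma graph_homeo u v : strictly_increasing u -> continuity u -> continuity v ->
  (forall y, exists a b, u a <= y <= u b) ->
  homeo_onto Cdist Rdist (graph_image u v) allR fst.
Proof.
  intros Hu Hcu Hcv Hs.
  destruct (increasing_inverse u Hcu Hu Hs) as [g [Hg1 [Hg2 Hg3]]].
  split; [intros; exact I|]. split; [|split].
  - intros w1 w2 [t1 ->] [t2 ->]. simpl. intros Heq.
    rewrite <- (Hg2 t1), <- (Hg2 t2), Heq. reflexivity.
  - intros w _ e He. exists e. split; [exact He|]. intros w' _ Hw. unfold Rdist, Cdist in *.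
    eapply Rle_lt_trans; [apply euclid_ge_l | exact Hw].
  - exists (fun y => (y, v (g y))). split.
    + intros y _. split; [exists (g y); rewrite Hg1; reflexivity | reflexivity].
    + intros y _ e He.
      destruct (cont_at_of_continuity v Hcv (g y) (e / 2) ltac:(lra)) as [d1 [Hd1 Hv]].
      destruct (cont_at_of_continuity g Hg3 y d1 Hd1) as [d2 [Hd2 Hg]].
      exists (Rmin (e / 2) d2). split; [apply Rmin_glb_lt; lra|].
      intros y' _ Hy. unfold Rdist, Cdist in *. cbn [fst snd].
      pose proof (Rmin_l (e / 2) d2). pose proof (Rmin_r (e / 2) d2).
      pose proof (euclid_le_sum (y' - y) (v (g y') - v (g y))).
      assert (Rabs (v (g y') - v (g y)) < e / 2) by (apply Hv, Hg; lra). lra.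
Qed.

Lemma doubling_graph_homeo u v d : strictly_increasing u -> doubling_fn u d -> 0 < d ->
  continuity v -> homeo_onto Cdist Rdist (graph_image u v) allR fst.
Proof.
  intros Hu Hd Hd0 Hcv. apply graph_homeo; [exact Hu | | exact Hcv |].
  - exact (doubling_continuous u d Hu Hd Hd0).
  - exact (doubling_unbounded u d Hu Hd Hd0).
Qed.

Lemma graph_eta_qs u v eta : strictly_increasing u ->
  (forall R0 r, ratio_pairs u v R0 r -> R0 <= eta r) ->
  eta_qs Cdist Rdist (graph_image u v) fst eta.
Proof.
  intros Hu HS w wa wb [t ->] [ta ->] [tb ->] _ Hxa Hxb. unfold Rdist, Cdist. cbn [fst snd].
  assert (Ha : ta - t <> 0) by (intros E; apply Hxa; replace ta with t by lra; reflexivity).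
  assert (Hb : tb - t <> 0) by (intros E; apply Hxb; replace tb with t by lra; reflexivity).
  assert (Emass : forall s, Rabs (u t - u s) = mass u t (s - t)).
  { intros s. unfold mass. replace (t + (s - t)) with s by ring. apply Rabs_minus_sym. }
  assert (Echord : forall s, sqrt ((u t - u s) ^ 2 + (v t - v s) ^ 2) = chord u v t (s - t)).
  { intros s. unfold chord. replace (t + (s - t)) with s by ring. reflexivity. }
  rewrite !Emass, !Echord.
  pose proof (mass_pos u Hu t (tb - t) Hb).
  assert (HR : ratio_pairs u v (mass u t (ta - t) / mass u t (tb - t))
                 (chord u v t (ta - t) / chord u v t (tb - t)))
    by (exists t, (ta - t), (tb - t); auto).
  pose proof (HS _ _ HR) as Heta.
  apply Rmult_le_reg_r with (/ mass u t (tb - t)); [apply Rinv_0_lt_compat; auto|].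
  rewrite Rmult_assoc, Rinv_r, Rmult_1_r by lra. exact Heta.
Qed.

(** First assertion, in terms of [u] and [v]: the envelope of the ratio
    pairs, shifted by the identity, is a quasisymmetry control function. *)
Lemma graph_quasisymmetric u v d M : strictly_increasing u -> doubling_fn u d -> 0 < d ->
  zygmund_fn u v M -> continuity v -> 0 <= M -> qs_graph (graph_image u v).
Proof.
  intros Hu Hd Hd0 Hz Hv HM.
  pose proof (ratio_pairs_controlled u d Hu Hd Hd0 v M Hz Hv HM) as HS.
  split; [exact (doubling_graph_homeo u v d Hu Hd Hd0 Hv)|].
  exists (fun t => t + envelope _ HS t). split.
  - apply shift_profile_homeo, envelope_profile.
  - apply graph_eta_qs; [exact Hu|]. intros R0 r HR.
    pose proof (envelope_dominates _ HS R0 r HR). pose proof (ratio_pairs_range u Hu v R0 r HR). lra.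
Qed.

Lemma graph_s_quasisymmetric s u v d M : 0 < s ->
  strictly_increasing u -> doubling_fn u d -> 0 < d ->
  zygmund_fn u v M -> continuity v -> 0 <= M ->
  (forall R0 r, ratio_pairs u v R0 r -> r <= 2 / s -> R0 <= r + s / 2) ->
  s_qs_graph s (graph_image u v).
Proof.
  intros Hs Hu Hd Hd0 Hz Hv HM Hclose.
  pose proof (ratio_pairs_controlled u d Hu Hd Hd0 v M Hz Hv HM) as HS.
  pose proof (envelope_profile _ HS) as HF.
  split; [exact (doubling_graph_homeo u v d Hu Hd Hd0 Hv)|].
  exists (near_identity (envelope _ HS) s). split; [|split].
  - exact (near_identity_homeo _ s HF Hs).
  - exact (near_identity_small _ s Hs).
  - apply graph_eta_qs; [exact Hu|]. intros R0 r HR.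
    destruct (ratio_pairs_range u Hu v R0 r HR) as [HR0 Hr0].
    apply (near_identity_dominates _ s HF Hs R0 r HR0 Hr0 (envelope_dominates _ HS R0 r HR)).
    exact (Hclose R0 r HR).
Qed.

Lemma seminorm_approx mu v N e : Lambda_seminorm mu v N -> 0 < e ->
  0 <= N /\ exists M, 0 < M /\ zygmund_bound mu v M /\ M < N + e.
Proof.
  intros [HN1 HN2] He. split; [apply HN2; intros x [Hx _]; lra|].
  apply NNPP. intros Hn. assert (N + e <= N); [|lra].
  apply HN2. intros x Hx. apply Rnot_lt_le. intros Hlt. apply Hn. exists x. tauto.
Qed.

Theorem theorem1p2 :
  (forall (mu : (R -> Prop) -> ereal) (delta : R) (u v : R -> R),
      radon_measure mu -> nonzero_measure mu ->
      0 < delta -> doubling mu delta ->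
      (forall a b, a < b -> mu (Icc a b) = EFin (u b - u a)) ->
      in_Lambda mu v ->
      qs_graph (graph_image u v)) /\
  (forall s : R, 0 < s -> exists eps : R, 0 < eps /\
    forall (mu : (R -> Prop) -> ereal) (delta : R) (u v : R -> R) (N : R),
      radon_measure mu -> nonzero_measure mu ->
      0 < delta -> doubling mu delta ->
      (forall a b, a < b -> mu (Icc a b) = EFin (u b - u a)) ->
      in_Lambda mu v ->
      Lambda_seminorm mu v N ->
      delta <= eps -> N <= eps ->
      s_qs_graph s (graph_image u v)).
Proof.
  split.
  - intros mu d u v Hrad Hnz Hd0 Hdb Hr [Hv [M [HM Hz]]].
    destruct (distribution_properties mu d u Hrad Hnz Hdb Hr) as [Hu Hd].
    apply (graph_quasisymmetric u v d M Hu Hd Hd0); [| exact Hv | lra].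
    exact (distribution_zygmund mu u v M Hz Hr).
  - intros s Hs. destruct (near_identity_threshold s Hs) as [eps [Heps Hclose]].
    exists eps. split; [exact Heps|].
    intros mu d u v N Hrad Hnz Hd0 Hdb Hr [Hv _] HN Hde HNe.
    (* an admissible Zygmund constant [M < N + eps <= 2 eps] *)
    destruct (seminorm_approx mu v N eps HN Heps) as [HN0 [M [HM [Hz HMN]]]].
    destruct (distribution_properties mu d u Hrad Hnz Hdb Hr) as [Hu Hd].
    pose proof (distribution_zygmund mu u v M Hz Hr) as Hzv.
    apply (graph_s_quasisymmetric s u v d M Hs Hu Hd Hd0 Hzv Hv); [lra|].
    exact (Hclose u v d M Hu Hd Hd0 Hzv Hv ltac:(lra) Hde ltac:(lra)).
Qed.
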